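(* A nonzero tensor $A\in\mathrm{Sym}^d(\mathbb{R}^n)$ is critical in $\mathrm{Sym}^d(\mathbb{R}^n)$ if and only if there exist $r\in\mathbb{N}$, symmetric best rank-one approximations $Y_1,\dots,Y_r$ of $A$, and coefficients $\alpha_1,\dots,\alpha_r>0$ with $\sum_\ell\alpha_\ell=1$, such that \[ \Big(\frac{\|A\|_2}{\|A\|_F}\Big)^2A=\sum_{\ell=1}^r\alpha_\ell Y_\ell. \] In this case $A$ is also critical in the full space $\otimes_{j=1}^d\mathbb{R}^n$.
   Context: Tensors and norms: \begin{itemize} \item $\mathrm{Sym}^d(\mathbb{R}^n)$ is the space of real $n^d$-tensors invariant under permutation of indices. \item The Frobenius inner product is $\langle A,A'\rangle_F=\sum a_{i_1\dots i_d}a'_{i_1\dots i_d}$, with norm $\|\cdot\|_F$. \item The spectral norm is $\|A\|_2=\max_{\|x^{(j)}\|=1}\langle A,x^{(1)}\otimes\cdots\otimes x^{(d)}\rangle_F$. \end{itemize} A best rank-one approximation of $A$ is a rank-one tensor $Y$ minimizing $\|A-X\|_F$ over all rank-one tensors $X$. It is symmetric if it has the form $\lambda\,y\otimes\cdots\otimes y$. Generalized gradient (Clarke): for a Lipschitz function $f$ on a Euclidean space, the generalized gradient $\partial f(p)$ is the convex hull of all limits of gradients $\nabla f(p_i)$, taken over sequences $p_i\to p$ of differentiability points. Criticality: \begin{itemize} \item A nonzero $A\in\mathrm{Sym}^d(\mathbb{R}^n)$ is critical in $\mathrm{Sym}^d(\mathbb{R}^n)$ if $\lambda A\in\partial g(A/\|A\|_F)$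 for some $\lambda\in\mathbb{R}$, where $g$ is the spectral norm regarded as a function on the Euclidean space $(\mathrm{Sym}^d(\mathbb{R}^n),\langle\cdot,\cdot\rangle_F)$. \item $A$ is critical in $\otimes_{j=1}^d\mathbb{R}^n$ if the same holds with the spectral norm regarded as a function on the full tensor space. \end{itemize} *)

From Stdlib Require Import Reals Lra List Permutation ClassicalEpsilon.
Import ListNotations.
Open Scope R_scope.

(* A tensor in (R^n)^{⊗d} is represented by its entries, a function from
   multi-indices (lists of naturals) to R; only the entries at the
   multi-indices in [idx d n] (lists of length d with entries < n) matter. *)
Definition tensor := list nat -> R.

Fixpoint idx (d n : nat) : list (list nat) :=
  match d with
  | O => [ [] ]
  | S d' => concat (map (fun i => map (cons i) (idx d' n)) (seq 0 n))
  end.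

Definition lsum {A : Type} (s : list A) (f : A -> R) : R :=
  fold_right Rplus 0 (map f s).

Definition rsum (r : nat) (f : nat -> R) : R := lsum (seq 0 r) f.

Definition teq (d n : nat) (A B : tensor) : Prop :=
  forall l, In l (idx d n) -> A l = B l.

Definition tzero : tensor := fun _ => 0.
Definition tadd (A B : tensor) : tensor := fun l => A l + B l.
Definition tscale (c : R) (A : tensor) : tensor := fun l => c * A l.
Definition tsub (A B : tensor) : tensor := fun l => A l - B l.

Definition frob_ip (d n : nat) (A B : tensor) : R :=
  lsum (idx d n) (fun l => A l * B l).
Definition frob (d n : nat) (A : tensor) : R := sqrt (frob_ip d n A A).

(* vectors in R^n: functions nat -> R, coordinates 0..n-1 *)
Definition unit_vec (n : nat) (x : nat -> R) : Prop :=
  lsum (seq 0 n) (fun i => x i * x i) = 1.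

Fixpoint outer_from (xs : nat -> nat -> R) (j : nat) (l : list nat) : R :=
  match l with
  | [] => 1
  | i :: l' => xs j i * outer_from xs (S j) l'
  end.
Definition outer (xs : nat -> nat -> R) : tensor := outer_from xs 0.

Definition spec_values (d n : nat) (A : tensor) (v : R) : Prop :=
  exists xs : nat -> nat -> R,
    (forall j, (j < d)%nat -> unit_vec n (xs j)) /\ v = frob_ip d n A (outer xs).

Definition spec_norm (d n : nat) (A : tensor) : R :=
  epsilon (inhabits 0) (fun s => is_lub (spec_values d n A) s).

Definition is_sym (d n : nat) (A : tensor) : Prop :=
  forall l l', In l (idx d n) -> Permutation l l' -> A l = A l'.

Definition full_space (d n : nat) (A : tensor) : Prop := True.

Definition rank_one (d n : nat) (X : tensor) : Prop :=
  (exists xs : nat -> nat -> R, teq d n X (outer xs)) /\ ~ teq d n X tzero.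

Definition best_rank_one_approx (d n : nat) (A Y : tensor) : Prop :=
  rank_one d n Y /\
  forall X, rank_one d n X -> frob d n (tsub A Y) <= frob d n (tsub A X).

Definition symmetric_rank_one_form (d n : nat) (Y : tensor) : Prop :=
  exists (lam : R) (y : nat -> R),
    teq d n Y (tscale lam (outer (fun _ => y))).

(* Calculus on the Euclidean space (V, <.,.>_F), V a linear subspace of
   tensors given by a predicate. *)
Definition tconv (d n : nat) (p : nat -> tensor) (q : tensor) : Prop :=
  forall eps, eps > 0 -> exists N, forall k, (k >= N)%nat ->
    frob d n (tsub (p k) q) < eps.

Definition is_grad (d n : nat) (V : tensor -> Prop) (g : tensor -> R)
  (p G : tensor) : Prop :=
  V G /\
  forall eps, eps > 0 -> exists delta, delta > 0 /\
    forall h, V h -> frob d n h < delta ->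
      Rabs (g (tadd p h) - g p - frob_ip d n G h) <= eps * frob d n h.

Definition limit_grad (d n : nat) (V : tensor -> Prop) (g : tensor -> R)
  (p L : tensor) : Prop :=
  exists (ps Gs : nat -> tensor),
    (forall k, V (ps k) /\ is_grad d n V g (ps k) (Gs k)) /\
    tconv d n ps p /\ tconv d n Gs L.

(* Clarke generalized gradient: convex hull of the limiting gradients *)
Definition clarke_grad (d n : nat) (V : tensor -> Prop) (g : tensor -> R)
  (p Z : tensor) : Prop :=
  exists (r : nat) (c : nat -> R) (Ls : nat -> tensor),
    (forall k, (k < r)%nat -> 0 <= c k /\ limit_grad d n V g p (Ls k)) /\
    rsum r c = 1 /\
    teq d n Z (fun l => rsum r (fun k => c k * Ls k l)).

Definition critical (d n : nat) (V : tensor -> Prop) (A : tensor) : Prop :=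
  ~ teq d n A tzero /\
  exists lam : R,
    clarke_grad d n V (spec_norm d n)
      (tscale (/ frob d n A) A) (tscale lam A).

From Stdlib Require Import Reals Lra List Permutation ClassicalEpsilon Lia FunctionalExtensionality.
Import ListNotations.
Open Scope R_scope.

(* Write [σ = ||A||_2], [F = |A|_F], [p = A/F].  The proof has four steps.
   1. Banach's theorem (approximate form): for symmetric [q], [||q||_2] is approached by
      [±q(x,...,x)], [x] a unit vector.  We maximize [q(x^1,...,x^d)] plus the penalty
      [κ |Σ_a x^a ⊗ x^a|_F^2]; polarizing two adjacent slots shows that at a near-maximizer
      consecutive vectors are nearly parallel up to sign.
   2. Limiting gradients: on Sym^d, every limit of gradients of [||·||_2] at [p] is a
      maximizer [s x^{⊗d}] of [<p, ·>] (a gradient is close to a near-maximizer, by step 1,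
      and the set of [±x^{⊗d}] is closed); conversely, in any space containing Sym^d, every
      such maximizer is the limit of gradients along [p + t s x^{⊗d}], [t -> 0+].
   3. The symmetric best rank-one approximations of [A] are exactly the [σ s x^{⊗d}] with
      [s x^{⊗d}] a maximizer of [<A, ·>].
   4. Pairing [λ A = Σ_k c_k u_k] with [A] forces [λ = σ/F^2]; multiplying by [σ] gives
      [(σ/F)^2 A = Σ_k c_k Y_k].  Since the converse of step 2 works in any space containing
      Sym^d, criticality in Sym^d implies criticality in the full tensor space. *)


Lemma lsum_cons {A} (a : A) s f : lsum (a :: s) f = f a + lsum s f.
Proof. reflexivity. Qed.

Lemma lsum_app {A} (s t : list A) f : lsum (s ++ t) f = lsum s f + lsum t f.
Proof.
  induction s as [|a s IH]; [unfold lsum; simpl; ring|].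
  simpl. rewrite !lsum_cons, IH. ring.
Qed.

Lemma lsum_plus {A} (s : list A) f g :
  lsum s (fun x => f x + g x) = lsum s f + lsum s g.
Proof. induction s; [unfold lsum; simpl; ring|]. rewrite !lsum_cons, IHs. ring. Qed.

Lemma lsum_minus {A} (s : list A) f g :
  lsum s (fun x => f x - g x) = lsum s f - lsum s g.
Proof. induction s; [unfold lsum; simpl; ring|]. rewrite !lsum_cons, IHs. ring. Qed.

Lemma lsum_scal {A} (s : list A) c f : lsum s (fun x => c * f x) = c * lsum s f.
Proof. induction s; [unfold lsum; simpl; ring|]. rewrite !lsum_cons, IHs. ring. Qed.

Lemma lsum_zero {A} (s : list A) : lsum s (fun _ => 0) = 0.
Proof. induction s; [reflexivity|]. rewrite lsum_cons, IHs. ring. Qed.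

Lemma lsum_ext {A} (s : list A) f g :
  (forall x, In x s -> f x = g x) -> lsum s f = lsum s g.
Proof.
  induction s; intros H; [reflexivity|]. rewrite !lsum_cons.
  f_equal; [apply H; now left | apply IHs; intros; apply H; now right].
Qed.

Lemma lsum_nonneg {A} (s : list A) f :
  (forall x, In x s -> 0 <= f x) -> 0 <= lsum s f.
Proof.
  induction s; intros H; [unfold lsum; simpl; lra|]. rewrite lsum_cons.
  assert (0 <= f a) by (apply H; now left).
  assert (0 <= lsum s f) by (apply IHs; intros; apply H; now right). lra.
Qed.

Lemma lsum_ge_term {A} (s : list A) f a :
  (forall x, In x s -> 0 <= f x) -> In a s -> f a <= lsum s f.
Proof.
  induction s as [|b s IH]; intros H Ha; [destruct Ha|]. rewrite lsum_cons.
  assert (0 <= f b) by (apply H; now left).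
  assert (0 <= lsum s f) by (apply lsum_nonneg; intros; apply H; now right).
  destruct Ha as [<-|Ha]; [lra|].
  assert (f a <= lsum s f) by (apply IH; auto; intros; apply H; now right). lra.
Qed.

Lemma lsum_map {A B} (h : A -> B) s f : lsum (map h s) f = lsum s (fun x => f (h x)).
Proof. unfold lsum. now rewrite map_map. Qed.

Lemma lsum_concat_map {A B} (F : A -> list B) s f :
  lsum (concat (map F s)) f = lsum s (fun x => lsum (F x) f).
Proof. induction s; [reflexivity|]. simpl. rewrite lsum_app, lsum_cons, IHs. reflexivity. Qed.

Lemma lsum_perm {A} (s t : list A) f : Permutation s t -> lsum s f = lsum t f.
Proof.
  intros H; induction H; auto.
  - rewrite !lsum_cons, IHPermutation; reflexivity.
  - rewrite !lsum_cons; ring.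
  - congruence.
Qed.

Lemma lsum_swap {A B} (s : list A) (t : list B) f :
  lsum s (fun a => lsum t (fun b => f a b)) = lsum t (fun b => lsum s (fun a => f a b)).
Proof.
  induction s as [|a s IH]; simpl.
  - symmetry. apply lsum_zero.
  - rewrite lsum_cons, IH, <- lsum_plus. apply lsum_ext. intros; rewrite lsum_cons; ring.
Qed.

Lemma lsum_zero_inv {A} (s : list A) f :
  (forall x, In x s -> 0 <= f x) -> lsum s f = 0 -> forall x, In x s -> f x = 0.
Proof.
  intros H Hs x Hx. pose proof (lsum_ge_term s f x H Hx). pose proof (H x Hx). lra.
Qed.

Lemma rsum_S r f : rsum (S r) f = rsum r f + f r.
Proof. unfold rsum. rewrite seq_S, lsum_app. unfold lsum at 2. simpl. ring. Qed.

Lemma rsum_ext r f g : (forall k, (k < r)%nat -> f k = g k) -> rsum r f = rsum r g.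
Proof. intros H; apply lsum_ext. intros x Hx; apply in_seq in Hx; apply H; lia. Qed.

Lemma rsum_scal r c f : rsum r (fun a => c * f a) = c * rsum r f.
Proof. apply lsum_scal. Qed.

Lemma rsum_two d k g : (S k < d)%nat -> (forall a, a <> k -> a <> S k -> g a = 0) ->
  rsum d g = g k + g (S k).
Proof.
  intros Hk H. unfold rsum. replace d with (k + (2 + (d - k - 2)))%nat by lia.
  rewrite seq_app, lsum_app, seq_app, lsum_app. simpl.
  rewrite (lsum_ext (seq 0 k) _ (fun _ => 0)), lsum_zero.
  2:{ intros x Hx; apply in_seq in Hx; apply H; lia. }
  rewrite (lsum_ext (seq (k + 2) _) _ (fun _ => 0)), lsum_zero.
  2:{ intros x Hx; apply in_seq in Hx; apply H; lia. }
  unfold lsum; simpl. replace (k + 1)%nat with (S k) by lia. ring.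
Qed.

Lemma rsum_change2 d k f f' : (S k < d)%nat -> (forall a, a <> k -> a <> S k -> f' a = f a) ->
  rsum d f' = rsum d f - f k - f (S k) + f' k + f' (S k).
Proof.
  intros Hk H.
  assert (E : rsum d (fun a => f' a - f a) = (f' k - f k) + (f' (S k) - f (S k))).
  { apply (rsum_two d k (fun a => f' a - f a)); auto. intros a H1 H2. rewrite H; auto; ring. }
  unfold rsum in E. rewrite lsum_minus in E. unfold rsum. lra.
Qed.

Lemma rsum_drop_zero_coeffs r (c : nat -> R) (Y : nat -> tensor) (P : tensor -> Prop) :
  (forall k, (k < r)%nat -> 0 <= c k /\ P (Y k)) ->
  exists r' c' Y', (forall k, (k < r')%nat -> 0 < c' k /\ P (Y' k)) /\
    rsum r' c' = rsum r c /\
    forall l, rsum r' (fun k => c' k * Y' k l) = rsum r (fun k => c k * Y k l).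
Proof.
  induction r as [|r IH]; intros H.
  - exists 0%nat, c, Y. split; [intros; lia | split; reflexivity].
  - destruct IH as [r' [c' [Y' [H1 [H2 H3]]]]]; [intros; apply H; lia|].
    destruct (H r (Nat.lt_succ_diag_r r)) as [Hc HP].
    destruct (Req_dec (c r) 0) as [E|E].
    + exists r', c', Y'. split; auto. rewrite rsum_S, E, H2. split; [ring|].
      intros l. rewrite rsum_S, E, H3. ring.
    + set (c'' := fun k => if Nat.eqb k r' then c r else c' k).
      set (Y'' := fun k => if Nat.eqb k r' then Y r else Y' k).
      assert (Hold : forall k, (k < r')%nat -> c'' k = c' k /\ Y'' k = Y' k).
      { intros k Hk. unfold c'', Y''. destruct (Nat.eqb_spec k r'); [lia|auto]. }
      exists (S r'), c'', Y''. split; [|split].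
      * intros k Hk. unfold c'', Y''. destruct (Nat.eqb_spec k r'); [split; [lra|auto]|].
        apply H1; lia.
      * rewrite !rsum_S, <- H2. unfold c'' at 2. rewrite Nat.eqb_refl. f_equal.
        apply rsum_ext. intros k Hk. apply Hold; auto.
      * intros l. rewrite !rsum_S, <- H3. unfold c'' at 2, Y'' at 2. rewrite Nat.eqb_refl.
        f_equal. apply rsum_ext. intros k Hk. destruct (Hold k Hk) as [-> ->]. reflexivity.
Qed.

Lemma In_idx d n l : In l (idx d n) <-> length l = d /\ Forall (fun i => (i < n)%nat) l.
Proof.
  revert l; induction d; intros l; simpl.
  - split; [intros [<-|[]]; split; auto|].
    intros [H _]; destruct l; [now left | discriminate].
  - rewrite in_concat. split.
    + intros [s [Hs Hl]]. apply in_map_iff in Hs as [i [<- Hi]].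
      apply in_map_iff in Hl as [m [<- Hm]]. apply IHd in Hm as [H1 H2].
      apply in_seq in Hi. simpl. split; auto. constructor; auto; lia.
    + intros [H1 H2]. destruct l as [|i m]; [discriminate|]. inversion H2; subst.
      exists (map (cons i) (idx d n)). split.
      * apply in_map_iff. exists i; split; auto. apply in_seq; lia.
      * apply in_map. apply IHd. simpl in H1; split; auto.
Qed.

Lemma NoDup_idx d n : NoDup (idx d n).
Proof.
  induction d as [|d IH]; simpl; [constructor; auto; constructor|].
  assert (Hs : NoDup (seq 0 n)) by apply seq_NoDup.
  induction Hs as [|a s Hna Hnd IHs]; simpl; [constructor|].
  apply NoDup_app; auto.
  - apply NoDup_map_NoDup_ForallPairs; auto. intros x y _ _ H; now inversion H.
  - intros x G1 G2. apply in_map_iff in G1 as [m [<- _]]. apply in_concat in G2 as [t [Ht Hl]].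
    apply in_map_iff in Ht as [i [<- Hi]]. apply in_map_iff in Hl as [m' [E _]].
    inversion E; subst. contradiction.
Qed.

Lemma lsum_idx_S d n f :
  lsum (idx (S d) n) f = lsum (seq 0 n) (fun i => lsum (idx d n) (fun l => f (i :: l))).
Proof. simpl. rewrite lsum_concat_map. apply lsum_ext. intros. apply lsum_map. Qed.

Definition sum_ip {A} (s : list A) (f g : A -> R) := lsum s (fun x => f x * g x).

Lemma sum_ip_sym {A} (s : list A) f g : sum_ip s f g = sum_ip s g f.
Proof. unfold sum_ip. apply lsum_ext; intros; ring. Qed.

Lemma sum_ip_self_nonneg {A} (s : list A) f : 0 <= sum_ip s f f.
Proof. apply lsum_nonneg; intros; nra. Qed.

Lemma nonneg_quadratic_discr a b c :
  0 <= c -> (forall t, 0 <= a - 2 * t * b + t * t * c) -> b * b <= a * c.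
Proof.
  intros Hc H. destruct (Req_dec c 0) as [E|E].
  - subst. destruct (Req_dec b 0) as [Eb|Eb]; [subst; nra|].
    specialize (H ((a + 1) / (2 * b))).
    replace (2 * ((a + 1) / (2 * b)) * b) with (a + 1) in H by (field; auto). lra.
  - specialize (H (b / c)).
    replace (a - 2 * (b / c) * b + b / c * (b / c) * c) with ((a * c - b * b) / c) in H
      by (field; lra).
    assert (0 <= (a * c - b * b) / c * c) by (apply Rmult_le_pos; lra).
    replace ((a * c - b * b) / c * c) with (a * c - b * b) in H0 by (field; lra). lra.
Qed.

(* Cauchy–Schwarz, from the discriminant of [t ↦ |f - t g|^2]. *)
Lemma sum_ip_cauchy_schwarz {A} (s : list A) f g :
  sum_ip s f g * sum_ip s f g <= sum_ip s f f * sum_ip s g g.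
Proof.
  apply nonneg_quadratic_discr; [apply sum_ip_self_nonneg|]. intros t.
  pose proof (sum_ip_self_nonneg s (fun x => f x - t * g x)) as H. unfold sum_ip in *.
  replace (lsum s (fun x => f x * f x) - 2 * t * lsum s (fun x => f x * g x)
           + t * t * lsum s (fun x => g x * g x))
    with (lsum s (fun x => (f x - t * g x) * (f x - t * g x))); auto.
  rewrite <- !lsum_scal, <- lsum_minus, <- lsum_plus. apply lsum_ext; intros; ring.
Qed.

Lemma sqrt_cauchy_schwarz a b c : 0 <= a -> 0 <= c -> b * b <= a * c ->
  Rabs b <= sqrt a * sqrt c.
Proof.
  intros Ha Hc H. rewrite <- sqrt_mult, <- sqrt_Rsqr_abs by auto.
  apply sqrt_le_1; [apply Rle_0_sqr | apply Rmult_le_pos; auto | exact H].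
Qed.

Lemma sqrt_le_of_sq x y : 0 <= y -> 0 <= x -> x <= y * y -> sqrt x <= y.
Proof. intros Hy Hx H. rewrite <- (sqrt_square y) by auto. apply sqrt_le_1; auto. nra. Qed.

Lemma ip_self_nonneg d n A : 0 <= frob_ip d n A A.
Proof. apply (sum_ip_self_nonneg (idx d n)). Qed.

Lemma frob_nonneg d n A : 0 <= frob d n A.
Proof. apply sqrt_pos. Qed.

Lemma frob_sq d n A : frob d n A * frob d n A = frob_ip d n A A.
Proof. apply sqrt_sqrt, ip_self_nonneg. Qed.

Lemma ip_sym d n A B : frob_ip d n A B = frob_ip d n B A.
Proof. apply (sum_ip_sym (idx d n)). Qed.

Lemma ip_cauchy_schwarz d n A B : Rabs (frob_ip d n A B) <= frob d n A * frob d n B.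
Proof. apply sqrt_cauchy_schwarz; try apply ip_self_nonneg. apply (sum_ip_cauchy_schwarz (idx d n)). Qed.

Lemma ip_le d n A B : frob_ip d n A B <= frob d n A * frob d n B.
Proof. pose proof (ip_cauchy_schwarz d n A B). pose proof (Rle_abs (frob_ip d n A B)). lra. Qed.

Lemma ip_add_l d n A B C : frob_ip d n (tadd A B) C = frob_ip d n A C + frob_ip d n B C.
Proof. unfold frob_ip, tadd. rewrite <- lsum_plus. apply lsum_ext; intros; ring. Qed.

Lemma ip_sub_l d n A B C : frob_ip d n (tsub A B) C = frob_ip d n A C - frob_ip d n B C.
Proof. unfold frob_ip, tsub. rewrite <- lsum_minus. apply lsum_ext; intros; ring. Qed.

Lemma ip_scale_l d n c A C : frob_ip d n (tscale c A) C = c * frob_ip d n A C.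
Proof. unfold frob_ip, tscale. rewrite <- lsum_scal. apply lsum_ext; intros; ring. Qed.

Lemma ip_add_r d n A B C : frob_ip d n C (tadd A B) = frob_ip d n C A + frob_ip d n C B.
Proof. rewrite !(ip_sym d n C). apply ip_add_l. Qed.

Lemma ip_sub_r d n A B C : frob_ip d n C (tsub A B) = frob_ip d n C A - frob_ip d n C B.
Proof. rewrite !(ip_sym d n C). apply ip_sub_l. Qed.

Lemma ip_scale_r d n c A C : frob_ip d n C (tscale c A) = c * frob_ip d n C A.
Proof. rewrite !(ip_sym d n C). apply ip_scale_l. Qed.

Lemma ip_rsum d n P r c (T : nat -> tensor) :
  frob_ip d n P (fun l => rsum r (fun k => c k * T k l)) =
  rsum r (fun k => c k * frob_ip d n P (T k)).
Proof.
  unfold frob_ip, rsum.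
  rewrite (lsum_ext _ _ (fun l => lsum (seq 0 r) (fun k => P l * (c k * T k l)))).
  - rewrite lsum_swap. apply lsum_ext. intros k _. rewrite <- lsum_scal.
    apply lsum_ext; intros; ring.
  - intros l _. rewrite <- lsum_scal. reflexivity.
Qed.

Lemma ip_ext d n A A' B B' : teq d n A A' -> teq d n B B' ->
  frob_ip d n A B = frob_ip d n A' B'.
Proof. intros H1 H2. apply lsum_ext. intros l Hl. now rewrite H1, H2. Qed.

Lemma frob_ext d n A A' : teq d n A A' -> frob d n A = frob d n A'.
Proof. intros H. unfold frob. f_equal. now apply ip_ext. Qed.

Lemma frob_le_of_sq d n A y : 0 <= y -> frob_ip d n A A <= y * y -> frob d n A <= y.
Proof. intros. apply sqrt_le_of_sq; auto. apply ip_self_nonneg. Qed.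

Lemma frob_triangle d n A B : frob d n (tadd A B) <= frob d n A + frob d n B.
Proof.
  pose proof (frob_nonneg d n A); pose proof (frob_nonneg d n B).
  apply frob_le_of_sq; [lra|].
  rewrite ip_add_l, !ip_add_r. pose proof (ip_le d n A B). rewrite (ip_sym d n B A).
  rewrite <- (frob_sq d n A), <- (frob_sq d n B). nra.
Qed.

Lemma frob_scale d n c A : frob d n (tscale c A) = Rabs c * frob d n A.
Proof.
  unfold frob. rewrite ip_scale_l, ip_scale_r, <- Rmult_assoc, sqrt_mult_alt by nra.
  f_equal. rewrite <- sqrt_Rsqr_abs. reflexivity.
Qed.

Lemma frob_sub_sym d n A B : frob d n (tsub A B) = frob d n (tsub B A).
Proof.
  replace (tsub B A) with (tscale (-1) (tsub A B)).
  - rewrite frob_scale, Rabs_left by lra. ring.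
  - extensionality l. unfold tscale, tsub. ring.
Qed.

Lemma frob_dist_triangle d n A B C :
  frob d n (tsub A C) <= frob d n (tsub A B) + frob d n (tsub B C).
Proof.
  rewrite (frob_ext d n (tsub A C) (tadd (tsub A B) (tsub B C))); [apply frob_triangle|].
  intros l _; unfold tsub, tadd; ring.
Qed.

Lemma frob_sub_sq d n A B : frob d n (tsub A B) * frob d n (tsub A B) =
  frob d n A * frob d n A - 2 * frob_ip d n A B + frob d n B * frob d n B.
Proof. rewrite !frob_sq, ip_sub_l, !ip_sub_r, (ip_sym d n B A). ring. Qed.

Lemma frob_zero d n : frob d n tzero = 0.
Proof.
  unfold frob, frob_ip, tzero. rewrite (lsum_ext _ _ (fun _ => 0)) by (intros; ring).
  rewrite lsum_zero. apply sqrt_0.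
Qed.

Lemma teq_zero_of_frob d n A : frob d n A = 0 -> teq d n A tzero.
Proof.
  intros H l Hl. unfold tzero.
  assert (H0 : frob_ip d n A A = 0) by (rewrite <- frob_sq, H; ring).
  assert (A l * A l = 0).
  { apply (lsum_zero_inv (idx d n) (fun l => A l * A l)); auto. intros; nra. }
  nra.
Qed.

Lemma frob_pos d n A : ~ teq d n A tzero -> 0 < frob d n A.
Proof.
  intros H. pose proof (frob_nonneg d n A).
  destruct (Req_dec (frob d n A) 0) as [E|E]; [|lra].
  exfalso; apply H; now apply teq_zero_of_frob.
Qed.

Lemma entry_le_frob d n A l : In l (idx d n) -> Rabs (A l) <= frob d n A.
Proof.
  intros Hl. rewrite <- sqrt_Rsqr_abs. apply sqrt_le_1_alt. unfold Rsqr.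
  apply (lsum_ge_term (idx d n) (fun l => A l * A l)); auto.
  intros x _; apply (Rle_0_sqr (A x)).
Qed.

Lemma tconv_entry d n W L l : tconv d n W L -> In l (idx d n) -> Un_cv (fun j => W j l) (L l).
Proof.
  intros H Hl e He. destruct (H e He) as [N HN]. exists N. intros m Hm. unfold Rdist.
  pose proof (entry_le_frob d n (tsub (W m) L) l Hl). specialize (HN m Hm).
  unfold tsub in H0 at 1. lra.
Qed.

Lemma is_sym_add d n A B : is_sym d n A -> is_sym d n B -> is_sym d n (tadd A B).
Proof. intros HA HB l l' Hl Hp. unfold tadd. rewrite (HA l l'), (HB l l'); auto. Qed.

Lemma is_sym_scale d n c A : is_sym d n A -> is_sym d n (tscale c A).
Proof. intros HA l l' Hl Hp. unfold tscale. rewrite (HA l l'); auto. Qed.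

Lemma is_sym_sub d n A B : is_sym d n A -> is_sym d n B -> is_sym d n (tsub A B).
Proof. intros HA HB l l' Hl Hp. unfold tsub. rewrite (HA l l'), (HB l l'); auto. Qed.

Definition vip (n : nat) (x y : nat -> R) := sum_ip (seq 0 n) x y.
Definition vnorm (n : nat) (x : nat -> R) := sqrt (vip n x x).
Definition vlin (a : R) (x : nat -> R) (b : R) (y : nat -> R) : nat -> R :=
  fun i => a * x i + b * y i.

Lemma vip_sym n x y : vip n x y = vip n y x.
Proof. apply sum_ip_sym. Qed.

Lemma vip_self_nonneg n x : 0 <= vip n x x.
Proof. apply sum_ip_self_nonneg. Qed.

Lemma vnorm_nonneg n x : 0 <= vnorm n x.
Proof. apply sqrt_pos. Qed.

Lemma vnorm_sq n x : vnorm n x * vnorm n x = vip n x x.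
Proof. apply sqrt_sqrt, vip_self_nonneg. Qed.

Lemma vip_lin_l n a x b y z : vip n (vlin a x b y) z = a * vip n x z + b * vip n y z.
Proof. unfold vip, sum_ip, vlin. rewrite <- !lsum_scal, <- lsum_plus. apply lsum_ext; intros; ring. Qed.

Lemma vip_lin_r n a x b y z : vip n z (vlin a x b y) = a * vip n z x + b * vip n z y.
Proof. rewrite !(vip_sym n z). apply vip_lin_l. Qed.

Lemma vip_cauchy_schwarz n x y : Rabs (vip n x y) <= vnorm n x * vnorm n y.
Proof. apply sqrt_cauchy_schwarz; try apply vip_self_nonneg. apply sum_ip_cauchy_schwarz. Qed.

Lemma vnorm_le_of_sq n x y : 0 <= y -> vip n x x <= y * y -> vnorm n x <= y.
Proof. intros. apply sqrt_le_of_sq; auto. apply vip_self_nonneg. Qed.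

Lemma vnorm_ext n x y : (forall i, (i < n)%nat -> x i = y i) -> vnorm n x = vnorm n y.
Proof.
  intros H. unfold vnorm, vip, sum_ip. f_equal. apply lsum_ext.
  intros i Hi. apply in_seq in Hi. rewrite H by lia. reflexivity.
Qed.

Lemma vnorm_triangle n a x b y :
  vnorm n (vlin a x b y) <= Rabs a * vnorm n x + Rabs b * vnorm n y.
Proof.
  pose proof (vnorm_nonneg n x); pose proof (vnorm_nonneg n y).
  pose proof (Rabs_pos a); pose proof (Rabs_pos b).
  apply vnorm_le_of_sq; [nra|].
  rewrite vip_lin_l, !vip_lin_r, (vip_sym n y x), <- (vnorm_sq n x), <- (vnorm_sq n y).
  assert (Hab : a * b * vip n x y <= Rabs a * Rabs b * (vnorm n x * vnorm n y)).
  { pose proof (Rle_abs (a * b * vip n x y)). rewrite !Rabs_mult in H3.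
    pose proof (vip_cauchy_schwarz n x y).
    pose proof (Rabs_pos (vip n x y)). pose proof (Rmult_le_pos _ _ H1 H2). nra. }
  assert (a * a = Rabs a * Rabs a) by (rewrite <- Rabs_mult, Rabs_pos_eq; nra).
  assert (b * b = Rabs b * Rabs b) by (rewrite <- Rabs_mult, Rabs_pos_eq; nra). nra.
Qed.

Lemma vnorm_zero_vec n : vnorm n (fun _ => 0) = 0.
Proof.
  unfold vnorm, vip, sum_ip. rewrite (lsum_ext _ _ (fun _ => 0)) by (intros; ring).
  rewrite lsum_zero. apply sqrt_0.
Qed.

Lemma unit_vec_vnorm n x : unit_vec n x -> vnorm n x = 1.
Proof. intros H. unfold vnorm. change (vip n x x) with (lsum (seq 0 n) (fun i => x i * x i)). rewrite H. apply sqrt_1. Qed.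

Lemma unit_vip_bound n x y : unit_vec n x -> unit_vec n y -> Rabs (vip n x y) <= 1.
Proof.
  intros Hx Hy. pose proof (vip_cauchy_schwarz n x y).
  rewrite (unit_vec_vnorm n x), (unit_vec_vnorm n y) in H; auto. lra.
Qed.

Lemma unit_vec_scale n c v : c * c * vip n v v = 1 -> unit_vec n (fun i => c * v i).
Proof.
  intros H. unfold unit_vec. rewrite (lsum_ext _ _ (fun i => (c * c) * (v i * v i))) by (intros; ring).
  rewrite lsum_scal. exact H.
Qed.

Lemma unit_vec_normalize n v : vnorm n v <> 0 -> unit_vec n (fun i => v i / vnorm n v).
Proof.
  intros H. replace (fun i => v i / vnorm n v) with (fun i => / vnorm n v * v i)
    by (extensionality i; unfold Rdiv; ring).
  apply unit_vec_scale. rewrite <- vnorm_sq. field. auto.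
Qed.

Fixpoint prodR (d : nat) (f : nat -> R) : R :=
  match d with O => 1 | S d' => f O * prodR d' (fun k => f (S k)) end.

Lemma prodR_ext d f g : (forall k, (k < d)%nat -> f k = g k) -> prodR d f = prodR d g.
Proof.
  revert f g; induction d; intros f g H; simpl; auto.
  rewrite H by lia. f_equal. apply IHd; intros; apply H; lia.
Qed.

Lemma prodR_mult d f g : prodR d (fun k => f k * g k) = prodR d f * prodR d g.
Proof. revert f g; induction d; intros; simpl; [ring|]. rewrite IHd; ring. Qed.

Lemma prodR_one d f : (forall k, (k < d)%nat -> f k = 1) -> prodR d f = 1.
Proof.
  intros H. rewrite (prodR_ext d f (fun _ => 1)) by auto. clear H.
  induction d; simpl; auto. rewrite IHd; ring.
Qed.

Lemma prodR_nonneg d f : (forall k, (k < d)%nat -> 0 <= f k) -> 0 <= prodR d f.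
Proof.
  revert f; induction d; intros f H; simpl; [lra|].
  apply Rmult_le_pos; [apply H; lia | apply IHd; intros; apply H; lia].
Qed.

Lemma prodR_zero d f k : (k < d)%nat -> f k = 0 -> prodR d f = 0.
Proof.
  revert f k; induction d; intros f k Hk H; [lia|]. simpl. destruct k.
  - rewrite H; ring.
  - rewrite (IHd _ k); auto; [ring | lia].
Qed.

Lemma prodR_const_pos m a : 0 < a -> 0 < prodR m (fun _ => a).
Proof. intros H; induction m; simpl; [lra|]. apply Rmult_lt_0_compat; auto. Qed.

Lemma prodR_single d f k : (k < d)%nat -> (forall j, (j < d)%nat -> j <> k -> f j = 1) ->
  prodR d f = f k.
Proof.
  revert f k; induction d; intros f k Hk H; [lia|]. simpl. destruct k.
  - rewrite prodR_one; [ring|]. intros j Hj. apply H; lia.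
  - rewrite H by lia. rewrite (IHd (fun j => f (S j)) k); [ring | lia |].
    intros j Hj Hjk. apply H; lia.
Qed.

Lemma outer_from_ext xs ys j l : (forall m, (j <= m)%nat -> (m < j + length l)%nat -> xs m = ys m) ->
  outer_from xs j l = outer_from ys j l.
Proof.
  revert j; induction l; intros j H; simpl; auto. simpl in H.
  rewrite H by lia. f_equal. apply IHl. intros; apply H; lia.
Qed.

Lemma outer_from_scale xs c j l :
  outer_from (fun m i => c m * xs m i) j l = prodR (length l) (fun k => c (j + k)%nat) * outer_from xs j l.
Proof.
  revert j; induction l; intros j; simpl; [ring|]. rewrite IHl, Nat.add_0_r.
  rewrite (prodR_ext _ (fun k => c (S j + k)%nat) (fun k => c (j + S k)%nat)) by (intros; f_equal; lia).
  ring.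
Qed.

Lemma outer_from_const_shift (x : nat -> R) j k l :
  outer_from (fun _ => x) j l = outer_from (fun _ => x) k l.
Proof. revert j k; induction l; intros; simpl; auto. f_equal; auto. Qed.

Lemma outer_from_const_perm (x : nat -> R) j l l' : Permutation l l' ->
  outer_from (fun _ => x) j l = outer_from (fun _ => x) j l'.
Proof. intros H. revert j. induction H; intros j; simpl; auto; [rewrite IHPermutation; auto | ring | congruence]. Qed.

Lemma ip_outer_rec d n A xs j :
  frob_ip (S d) n A (outer_from xs j) =
  lsum (seq 0 n) (fun i => xs j i * frob_ip d n (fun l => A (i :: l)) (outer_from xs (S j))).
Proof.
  unfold frob_ip. rewrite lsum_idx_S. apply lsum_ext. intros i _.
  rewrite <- lsum_scal. apply lsum_ext. intros l _. simpl. ring.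
Qed.

Lemma ip_outer d n xs ys j :
  frob_ip d n (outer_from xs j) (outer_from ys j) =
  prodR d (fun k => vip n (xs (j + k)%nat) (ys (j + k)%nat)).
Proof.
  revert j; induction d; intros j; [unfold frob_ip; simpl; unfold lsum; simpl; ring|].
  rewrite ip_outer_rec. simpl.
  transitivity (lsum (seq 0 n) (fun i => xs j i * ys j i *
                  frob_ip d n (outer_from xs (S j)) (outer_from ys (S j)))).
  { apply lsum_ext. intros i _. unfold frob_ip. rewrite <- !lsum_scal.
    apply lsum_ext; intros; simpl; ring. }
  rewrite IHd, Nat.add_0_r.
  set (P := prodR d _).
  rewrite (lsum_ext _ _ (fun i => P * (xs j i * ys j i))) by (intros; ring).
  rewrite lsum_scal, Rmult_comm. f_equal. apply prodR_ext. intros k _.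
  rewrite <- plus_n_Sm. reflexivity.
Qed.

Lemma frob_outer d n xs : frob d n (outer xs) = prodR d (fun k => vnorm n (xs k)).
Proof.
  unfold frob, outer. rewrite ip_outer. simpl. revert xs.
  induction d; intros xs; simpl; [apply sqrt_1|].
  rewrite sqrt_mult_alt by apply vip_self_nonneg. f_equal. apply (IHd (fun k => xs (S k))).
Qed.

Definition unit_tuple (d n : nat) (xs : nat -> nat -> R) := forall j, (j < d)%nat -> unit_vec n (xs j).

Lemma frob_outer_unit d n xs : unit_tuple d n xs -> frob d n (outer xs) = 1.
Proof. intros H. rewrite frob_outer. apply prodR_one. intros k Hk. apply unit_vec_vnorm; auto. Qed.

Definition mform (d n : nat) (A : tensor) (xs : nat -> nat -> R) := frob_ip d n A (outer xs).

Definition set_slot (xs : nat -> nat -> R) (k : nat) (v : nat -> R) : nat -> nat -> R :=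
  fun j => if Nat.eqb j k then v else xs j.

Lemma set_slot_same xs k : set_slot xs k (xs k) = xs.
Proof. extensionality j. unfold set_slot. destruct (Nat.eqb_spec j k); subst; auto. Qed.

Lemma set_slot_comm xs k m v w : k <> m -> set_slot (set_slot xs k v) m w = set_slot (set_slot xs m w) k v.
Proof. intros H. extensionality j. unfold set_slot. destruct (Nat.eqb_spec j k), (Nat.eqb_spec j m); subst; auto; lia. Qed.

Lemma set_slot_eq xs k v : set_slot xs k v k = v.
Proof. unfold set_slot. now rewrite Nat.eqb_refl. Qed.

Lemma set_slot_neq xs k v j : j <> k -> set_slot xs k v j = xs j.
Proof. unfold set_slot. intros H. destruct (Nat.eqb_spec j k); auto; lia. Qed.

Lemma unit_tuple_set_slot d n xs k v : unit_tuple d n xs -> unit_vec n v -> unit_tuple d n (set_slot xs k v).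
Proof. intros H Hv j Hj. unfold set_slot. destruct (Nat.eqb j k); auto. Qed.

Lemma outer_from_lin xs k a b u v j l : (j <= k)%nat -> (k < j + length l)%nat ->
  outer_from (set_slot xs k (fun i => a * u i + b * v i)) j l =
  a * outer_from (set_slot xs k u) j l + b * outer_from (set_slot xs k v) j l.
Proof.
  revert j; induction l as [|i l IH]; intros j H1 H2; simpl in *; [lia|].
  destruct (Nat.eq_dec j k) as [->|Hjk].
  - rewrite !set_slot_eq.
    rewrite !(outer_from_ext (set_slot xs k _) xs) by (intros; apply set_slot_neq; lia). ring.
  - rewrite !set_slot_neq by auto. rewrite IH by lia. ring.
Qed.

Lemma mform_lin d n A xs k a b u v : (k < d)%nat ->
  mform d n A (set_slot xs k (fun i => a * u i + b * v i)) =
  a * mform d n A (set_slot xs k u) + b * mform d n A (set_slot xs k v).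
Proof.
  intros Hk. unfold mform, frob_ip, outer. rewrite <- !lsum_scal, <- lsum_plus. apply lsum_ext.
  intros l Hl. apply In_idx in Hl as [Hlen _]. rewrite outer_from_lin by lia. ring.
Qed.

Lemma mform_neg_slot d n A xs : (1 <= d)%nat ->
  mform d n A (set_slot xs 0 (vlin (-1) (xs O) 0 (xs O))) = - mform d n A xs.
Proof. intros Hd. unfold vlin. rewrite mform_lin, set_slot_same by lia. ring. Qed.

Lemma mform_add d n A B xs : mform d n (tadd A B) xs = mform d n A xs + mform d n B xs.
Proof. apply ip_add_l. Qed.

Lemma mform_scale d n c A xs : mform d n (tscale c A) xs = c * mform d n A xs.
Proof. apply ip_scale_l. Qed.

Fixpoint swap_adj (k : nat) (l : list nat) : list nat :=
  match k, l with
  | O, a :: b :: t => b :: a :: t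
  | S k', a :: t => a :: swap_adj k' t
  | _, _ => l
  end.

Definition swap_slots (m : nat) (xs : nat -> nat -> R) : nat -> nat -> R :=
  fun p => if Nat.eqb p m then xs (S m) else if Nat.eqb p (S m) then xs m else xs p.

Lemma swap_adj_perm k l : Permutation l (swap_adj k l).
Proof. revert l; induction k; intros l; destruct l as [|a [|b t]]; simpl; auto; constructor; auto. Qed.

Lemma swap_adj_invol k l : swap_adj k (swap_adj k l) = l.
Proof.
  revert l; induction k; intros l; destruct l as [|a [|b t]]; simpl; auto.
  rewrite IHk; auto. f_equal. apply (IHk (b :: t)).
Qed.

Lemma outer_swap_adj xs k j l : (S k < length l)%nat ->
  outer_from xs j (swap_adj k l) = outer_from (swap_slots (j + k) xs) j l.
Proof.
  revert j l; induction k; intros j l H.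
  - destruct l as [|a [|b t]]; simpl in H; try lia. simpl. rewrite Nat.add_0_r.
    unfold swap_slots at 1 2. rewrite Nat.eqb_refl.
    destruct (Nat.eqb_spec (S j) j); [lia|]. rewrite Nat.eqb_refl.
    rewrite (outer_from_ext (swap_slots j xs) xs); [ring|].
    intros m Hm _. unfold swap_slots.
    destruct (Nat.eqb_spec m j); [lia|]. destruct (Nat.eqb_spec m (S j)); [lia|]. auto.
  - destruct l as [|a t]; simpl in H; try lia. simpl. rewrite IHk by lia.
    unfold swap_slots at 2.
    destruct (Nat.eqb_spec j (j + S k)); [lia|]. destruct (Nat.eqb_spec j (S (j + S k))); [lia|].
    f_equal. replace (j + S k)%nat with (S j + k)%nat by lia. reflexivity.
Qed.

Lemma idx_swap_perm d n k : Permutation (map (swap_adj k) (idx d n)) (idx d n).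
Proof.
  assert (Hin : forall l, In l (idx d n) -> In (swap_adj k l) (idx d n)).
  { intros l Hl. apply In_idx in Hl as [H1 H2]. apply In_idx. split.
    - rewrite <- H1. symmetry. apply Permutation_length, swap_adj_perm.
    - eapply Permutation_Forall; [apply swap_adj_perm | auto]. }
  apply NoDup_Permutation; [| apply NoDup_idx |].
  - apply NoDup_map_NoDup_ForallPairs; [|apply NoDup_idx].
    intros x y _ _ H. rewrite <- (swap_adj_invol k x), H. apply swap_adj_invol.
  - intros l. split.
    + intros Hl. apply in_map_iff in Hl as [m [<- Hm]]. auto.
    + intros Hl. apply in_map_iff. exists (swap_adj k l). split; [apply swap_adj_invol | auto].
Qed.

Lemma mform_swap_slots d n A xs k : is_sym d n A -> (S k < d)%nat ->
  mform d n A (swap_slots k xs) = mform d n A xs.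
Proof.
  intros HA Hk. unfold mform, frob_ip, outer.
  transitivity (lsum (idx d n) (fun l => A (swap_adj k l) * outer_from xs 0 (swap_adj k l))).
  - apply lsum_ext. intros l Hl. rewrite <- (HA l (swap_adj k l) Hl (swap_adj_perm k l)).
    rewrite outer_swap_adj; [reflexivity|]. apply In_idx in Hl as [-> _]. auto.
  - rewrite <- (lsum_map (swap_adj k) (idx d n) (fun l => A l * outer_from xs 0 l)).
    apply lsum_perm, idx_swap_perm.
Qed.

Definition sym_rank1 (x : nat -> R) (s : R) : tensor := tscale s (outer (fun _ => x)).

Lemma sym_rank1_sym d n x s : is_sym d n (sym_rank1 x s).
Proof. intros l l' _ H. unfold sym_rank1, tscale, outer. now rewrite (outer_from_const_perm x 0 l l' H). Qed.

Lemma ip_sym_rank1 d n q x s : frob_ip d n q (sym_rank1 x s) = s * mform d n q (fun _ => x).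
Proof. unfold sym_rank1. apply ip_scale_r. Qed.

Lemma sign_abs s : s * s = 1 -> Rabs s = 1.
Proof.
  intros H. assert (Rabs s * Rabs s = 1) by (rewrite <- Rabs_mult, H; apply Rabs_R1).
  pose proof (Rabs_pos s). nra.
Qed.

Lemma frob_sym_rank1 d n x s : unit_vec n x -> s * s = 1 -> frob d n (sym_rank1 x s) = 1.
Proof.
  intros Hx Hs. unfold sym_rank1. rewrite frob_scale, frob_outer_unit, sign_abs; auto; [ring|].
  intros j _; auto.
Qed.

Lemma scale_outer_rank1 d n zs tau : (1 <= d)%nat ->
  teq d n (tscale tau (outer zs)) (outer (set_slot zs 0 (vlin tau (zs O) 0 (zs O)))).
Proof.
  intros Hd l Hl. apply In_idx in Hl as [Hlen _]. destruct l as [|i l']; simpl in Hlen; [lia|].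
  unfold tscale, outer. simpl. rewrite set_slot_eq.
  rewrite (outer_from_ext (set_slot zs 0 _) zs) by (intros; apply set_slot_neq; lia).
  unfold vlin. ring.
Qed.

Lemma sym_rank1_as_tuple d n q x s : (1 <= d)%nat -> unit_vec n x -> s * s = 1 ->
  unit_tuple d n (set_slot (fun _ => x) 0 (vlin s x 0 x)) /\
  mform d n q (set_slot (fun _ => x) 0 (vlin s x 0 x)) = frob_ip d n q (sym_rank1 x s).
Proof.
  intros Hd Hx Hs. split.
  - apply unit_tuple_set_slot; [intros j _; auto|].
    replace (vlin s x 0 x) with (fun i => s * x i) by (extensionality i; unfold vlin; ring).
    apply unit_vec_scale. change (vip n x x) with (lsum (seq 0 n) (fun i => x i * x i)).
    rewrite Hx. lra.
  - rewrite ip_sym_rank1. unfold vlin. rewrite mform_lin, (set_slot_same (fun _ => x) 0) by lia. ring.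
Qed.

Definition basis_vec (a : nat) : nat -> R := fun i => if Nat.eqb i a then 1 else 0.

Lemma lsum_basis_vec (s : list nat) a F : NoDup s -> In a s ->
  lsum s (fun i => basis_vec a i * F i) = F a.
Proof.
  induction s as [|b s IH]; intros Hnd Hin; [destruct Hin|]. inversion Hnd; subst.
  rewrite lsum_cons. unfold basis_vec at 1. destruct Hin as [<-|Hin].
  - rewrite Nat.eqb_refl, (lsum_ext _ _ (fun _ => 0)), lsum_zero; [ring|].
    intros x Hx. unfold basis_vec. destruct (Nat.eqb_spec x b); subst; [contradiction | ring].
  - destruct (Nat.eqb_spec b a); subst; [contradiction|]. rewrite IH; auto. ring.
Qed.

Lemma basis_vec_unit n a : (a < n)%nat -> unit_vec n (basis_vec a).
Proof.
  intros H. unfold unit_vec. rewrite lsum_basis_vec; [| apply seq_NoDup | apply in_seq; lia].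
  unfold basis_vec; rewrite Nat.eqb_refl; ring.
Qed.

Lemma ip_basis_outer n l : Forall (fun i => (i < n)%nat) l -> forall A f j,
  (forall m, (m < length l)%nat -> f (j + m)%nat = nth m l 0%nat) ->
  frob_ip (length l) n A (outer_from (fun m => basis_vec (f m)) j) = A l.
Proof.
  induction l as [|a l IH]; intros Hl A f j Hf.
  - unfold frob_ip. simpl. unfold lsum; simpl. ring.
  - inversion Hl; subst. simpl length. rewrite ip_outer_rec.
    assert (Hfa : f j = a) by (rewrite <- (Nat.add_0_r j); apply (Hf 0%nat); simpl; lia).
    rewrite Hfa, lsum_basis_vec; [| apply seq_NoDup | apply in_seq; lia].
    apply (IH H2 (fun l' => A (a :: l')) f (S j)). intros m Hm.
    change (nth m l 0%nat) with (nth (S m) (a :: l) 0%nat).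
    rewrite <- (Hf (S m)) by (simpl; lia). f_equal; lia.
Qed.

Lemma mform_basis d n A l : In l (idx d n) ->
  unit_tuple d n (fun m => basis_vec (nth m l 0%nat)) /\
  mform d n A (fun m => basis_vec (nth m l 0%nat)) = A l.
Proof.
  intros Hl. apply In_idx in Hl as [H1 H2]. split.
  - intros j Hj. apply basis_vec_unit. apply Forall_nth; auto. lia.
  - unfold mform, outer. subst d. apply ip_basis_outer; auto.
Qed.

Lemma lub_approx (E : R -> Prop) m eps : is_lub E m -> eps > 0 -> exists v, E v /\ m - eps < v.
Proof.
  intros [H1 H2] He. apply NNPP. intros Hno. assert (m <= m - eps); [|lra].
  apply H2. intros v Hv. apply Rnot_lt_le. intros Hlt. apply Hno. exists v; auto.
Qed.

Lemma sup_exists (E : R -> Prop) (M v0 : R) : E v0 -> (forall v, E v -> v <= M) -> exists m, is_lub E m.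
Proof.
  intros H0 HM. destruct (completeness E) as [m Hm]; [exists M; intros v Hv; auto | exists v0; auto |].
  eauto.
Qed.

Lemma spec_values_bound d n A v : spec_values d n A v -> v <= frob d n A.
Proof. intros [xs [Hu ->]]. pose proof (ip_le d n A (outer xs)). rewrite frob_outer_unit in H; auto. lra. Qed.

(* For [n >= 1] the supremum defining [||A||_2] exists, so [||A||_2] is that supremum. *)
Lemma spec_lub d n A : (1 <= n)%nat -> is_lub (spec_values d n A) (spec_norm d n A).
Proof.
  intros Hn. unfold spec_norm. apply epsilon_spec.
  apply (sup_exists _ (frob d n A) (mform d n A (fun _ => basis_vec 0))).
  - exists (fun _ => basis_vec 0). split; [intros j _; apply basis_vec_unit; lia | reflexivity].
  - apply spec_values_bound.
Qed.

Lemma spec_ge d n A xs : (1 <= n)%nat -> unit_tuple d n xs -> mform d n A xs <= spec_norm d n A.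
Proof. intros Hn H. apply (spec_lub d n A Hn). exists xs; split; auto. Qed.

Lemma spec_le d n A b : (1 <= n)%nat -> (forall xs, unit_tuple d n xs -> mform d n A xs <= b) ->
  spec_norm d n A <= b.
Proof. intros Hn H. apply (spec_lub d n A Hn). intros v [xs [Hu ->]]. now apply H. Qed.

Lemma spec_approx d n A eps : (1 <= n)%nat -> eps > 0 ->
  exists xs, unit_tuple d n xs /\ spec_norm d n A - eps < mform d n A xs.
Proof.
  intros Hn He. destruct (lub_approx _ _ eps (spec_lub d n A Hn) He) as [v [[xs [Hu ->]] Hv]].
  exists xs; auto.
Qed.

(* The general bound [A(z^1,...,z^d) <= ||A||_2 · Π_k |z^k|], by normalizing each slot. *)
Lemma mform_le_spec d n A zs : (1 <= n)%nat ->
  mform d n A zs <= spec_norm d n A * frob d n (outer zs).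
Proof.
  intros Hn. set (c := fun k => vnorm n (zs k)). rewrite frob_outer. fold c.
  destruct (classic (exists k, (k < d)%nat /\ c k = 0)) as [[k [Hk Hck]] | Hc].
  - rewrite (prodR_zero d c k Hk Hck). pose proof (ip_le d n A (outer zs)).
    rewrite frob_outer in H. fold c in H. rewrite (prodR_zero d c k Hk Hck) in H. unfold mform. lra.
  - assert (Hc0 : forall k, (k < d)%nat -> c k <> 0) by (intros k Hk E; apply Hc; eauto).
    set (zh := fun m i => zs m i / c m).
    assert (Hu : unit_tuple d n zh) by (intros j Hj; apply unit_vec_normalize, Hc0; auto).
    assert (E : mform d n A zs = prodR d c * mform d n A zh).
    { unfold mform, frob_ip, outer. rewrite <- lsum_scal. apply lsum_ext. intros l Hl.
      apply In_idx in Hl as [Hlen _].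
      rewrite (outer_from_ext zs (fun m i => c m * zh m i)), outer_from_scale, Hlen.
      { change (prodR d (fun k => c (0 + k)%nat)) with (prodR d c). ring. }
      intros m _ Hm. rewrite Hlen in Hm. extensionality i. unfold zh. field. apply Hc0; lia. }
    rewrite E. pose proof (spec_ge d n A zh Hn Hu).
    assert (0 <= prodR d c) by (apply prodR_nonneg; intros; apply vnorm_nonneg). nra.
Qed.

(* The same bound in absolute value, flipping the sign of one slot. *)
Lemma mform_abs_le_spec d n A zs : (1 <= n)%nat -> (1 <= d)%nat ->
  Rabs (mform d n A zs) <= spec_norm d n A * frob d n (outer zs).
Proof.
  intros Hn Hd. set (zs' := set_slot zs 0 (vlin (-1) (zs O) 0 (zs O))).
  assert (Hf : frob d n (outer zs') = frob d n (outer zs)).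
  { unfold zs'. rewrite <- (frob_ext _ _ _ _ (scale_outer_rank1 d n zs (-1) Hd)), frob_scale, Rabs_left by lra.
    ring. }
  pose proof (mform_le_spec d n A zs Hn). pose proof (mform_le_spec d n A zs' Hn).
  unfold zs' in H0 at 1. rewrite mform_neg_slot, Hf in H0 by auto.
  unfold Rabs; destruct Rcase_abs; lra.
Qed.

Lemma spec_abs d n A xs : (1 <= n)%nat -> (1 <= d)%nat -> unit_tuple d n xs ->
  Rabs (mform d n A xs) <= spec_norm d n A.
Proof.
  intros Hn Hd Hu. pose proof (mform_abs_le_spec d n A xs Hn Hd).
  rewrite frob_outer_unit in H by auto. lra.
Qed.

Lemma spec_nonneg d n A : (1 <= n)%nat -> (1 <= d)%nat -> 0 <= spec_norm d n A.
Proof.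
  intros Hn Hd. assert (Hu : unit_tuple d n (fun _ => basis_vec 0)) by (intros j _; apply basis_vec_unit; lia).
  pose proof (spec_abs d n A _ Hn Hd Hu). pose proof (Rabs_pos (mform d n A (fun _ => basis_vec 0))). lra.
Qed.

Lemma mform_slot_abs_le d n A xs k v : (1 <= n)%nat -> (k < d)%nat -> unit_tuple d n xs ->
  Rabs (mform d n A (set_slot xs k v)) <= spec_norm d n A * vnorm n v.
Proof.
  intros Hn Hk Hu. rewrite <- (set_slot_eq xs k v) at 2.
  replace (vnorm n (set_slot xs k v k)) with (frob d n (outer (set_slot xs k v))).
  - apply mform_abs_le_spec; auto. lia.
  - rewrite frob_outer. apply (prodR_single d (fun j => vnorm n (set_slot xs k v j)) k Hk).
    intros j Hj Hjk.
    rewrite set_slot_neq by auto. apply unit_vec_vnorm, Hu; auto.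
Qed.

(* Every entry is bounded by the spectral norm, so a nonzero tensor has positive spectral norm. *)
Lemma spec_pos d n A : (1 <= n)%nat -> (1 <= d)%nat -> ~ teq d n A tzero -> 0 < spec_norm d n A.
Proof.
  intros Hn Hd H. apply NNPP. intros Hno. apply H. intros l Hl. unfold tzero.
  destruct (mform_basis d n A l Hl) as [Hu E].
  pose proof (spec_abs d n A _ Hn Hd Hu). rewrite E in H0.
  pose proof (Rabs_pos (A l)). destruct (Req_dec (A l) 0) as [Z|Z]; auto.
  pose proof (Rabs_pos_lt _ Z). lra.
Qed.

Lemma spec_ext d n A B : (1 <= n)%nat -> teq d n A B -> spec_norm d n A = spec_norm d n B.
Proof.
  intros Hn H. apply Rle_antisym; apply spec_le; auto; intros xs Hu.
  - unfold mform. rewrite (ip_ext d n A B (outer xs) (outer xs)) by (auto; intros l _; auto).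
    apply spec_ge; auto.
  - unfold mform. rewrite (ip_ext d n B A (outer xs) (outer xs)) by (intros l Hl; auto; symmetry; auto).
    apply spec_ge; auto.
Qed.

Lemma spec_scale d n c A : (1 <= n)%nat -> 0 < c -> spec_norm d n (tscale c A) = c * spec_norm d n A.
Proof.
  intros Hn Hc. apply Rle_antisym.
  - apply spec_le; auto. intros xs Hu. rewrite mform_scale.
    apply Rmult_le_compat_l; [lra | apply spec_ge; auto].
  - apply (Rmult_le_reg_l (/ c)); [apply Rinv_0_lt_compat; auto|].
    rewrite <- Rmult_assoc, Rinv_l, Rmult_1_l by lra.
    apply spec_le; auto. intros xs Hu. pose proof (spec_ge d n (tscale c A) xs Hn Hu).
    rewrite mform_scale in H. apply (Rmult_le_compat_l (/ c)) in H; [|left; apply Rinv_0_lt_compat; auto].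
    rewrite <- Rmult_assoc, Rinv_l in H; lra.
Qed.

Lemma spec_add_le d n A B : (1 <= n)%nat -> spec_norm d n (tadd A B) <= spec_norm d n A + frob d n B.
Proof.
  intros Hn. apply spec_le; auto. intros xs Hu. rewrite mform_add.
  pose proof (spec_ge d n A xs Hn Hu). pose proof (ip_le d n B (outer xs)).
  rewrite frob_outer_unit in H0 by auto. unfold mform at 2. lra.
Qed.

Lemma spec_lipschitz d n A B : (1 <= n)%nat ->
  Rabs (spec_norm d n A - spec_norm d n B) <= frob d n (tsub A B).
Proof.
  intros Hn.
  assert (E1 : teq d n A (tadd B (tsub A B))) by (intros l _; unfold tadd, tsub; ring).
  assert (E2 : teq d n B (tadd A (tsub B A))) by (intros l _; unfold tadd, tsub; ring).
  pose proof (spec_add_le d n B (tsub A B) Hn). pose proof (spec_add_le d n A (tsub B A) Hn).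
  rewrite <- (spec_ext _ _ _ _ Hn E1) in H. rewrite <- (spec_ext _ _ _ _ Hn E2), frob_sub_sym in H0.
  unfold Rabs; destruct Rcase_abs; lra.
Qed.

Lemma sym_rank1_le_spec d n q x s : (1 <= n)%nat -> (1 <= d)%nat -> unit_vec n x -> s * s = 1 ->
  frob_ip d n q (sym_rank1 x s) <= spec_norm d n q.
Proof.
  intros Hn Hd Hx Hs. destruct (sym_rank1_as_tuple d n q x s Hd Hx Hs) as [Hu E].
  rewrite <- E. apply spec_ge; auto.
Qed.

(** * Banach's theorem: for symmetric [q], [||q||_2] is approached by [±q(x,...,x)].

    We maximize the penalized functional [q(x^1,...,x^d) + κ |Σ_a x^a⊗x^a|_F^2]
    over unit tuples.  Replacing an adjacent pair [(x, y)] by [(w, w)] or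
    [(w', -w')], with [w ∝ x + y] and [w' ∝ x - y], raises the functional on
    average by [2κ(1 - <x,y>^2)]; hence at a near-maximizer all adjacent
    vectors are nearly parallel (up to sign), and the tuple is close to
    [(±x^1, ..., ±x^1)]. *)

Definition gram (d : nat) (xs : nat -> nat -> R) : tensor :=
  fun l => rsum d (fun a => outer (fun _ => xs a) l).
Definition potential (d n : nat) (xs : nat -> nat -> R) : R := frob_ip 2 n (gram d xs) (gram d xs).
Definition penalized (d n : nat) (q : tensor) (kap : R) (xs : nat -> nat -> R) : R :=
  mform d n q xs + kap * potential d n xs.

Lemma potential_nonneg d n xs : 0 <= potential d n xs.
Proof. apply ip_self_nonneg. Qed.

Lemma potential_bound d n xs : unit_tuple d n xs -> potential d n xs <= INR d * INR d.
Proof.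
  intros Hu. assert (Hg : frob 2 n (gram d xs) <= INR d).
  { induction d as [|d IH].
    - rewrite (frob_ext 2 n _ tzero), frob_zero by (intros l _; reflexivity). simpl. lra.
    - rewrite (frob_ext 2 n _ (tadd (gram d xs) (outer (fun _ => xs d))))
        by (intros l _; unfold gram, tadd; rewrite rsum_S; reflexivity).
      pose proof (frob_triangle 2 n (gram d xs) (outer (fun _ => xs d))).
      rewrite frob_outer_unit in H by (intros j _; apply Hu; lia).
      rewrite S_INR. assert (frob 2 n (gram d xs) <= INR d) by (apply IH; intros j Hj; apply Hu; lia).
      lra. }
  unfold potential. rewrite <- frob_sq. pose proof (frob_nonneg 2 n (gram d xs)). nra.
Qed.

Lemma idx2 n l : In l (idx 2 n) -> exists i j, l = [i; j].
Proof. intros H. apply In_idx in H as [H _]. destruct l as [|i [|j [|]]]; simpl in H; try lia. eauto. Qed.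

Lemma ip_outer2 n u v : frob_ip 2 n (outer (fun _ => u)) (outer (fun _ => v)) = vip n u v * vip n u v.
Proof. unfold outer. rewrite ip_outer. simpl. ring. Qed.

Lemma gram_set_pair d xs k u v l : (S k < d)%nat ->
  gram d (set_slot (set_slot xs k u) (S k) v) l =
  gram d xs l - outer (fun _ => xs k) l - outer (fun _ => xs (S k)) l
  + outer (fun _ => u) l + outer (fun _ => v) l.
Proof.
  intros Hk. unfold gram.
  rewrite (rsum_change2 d k (fun a => outer (fun _ => xs a) l)); auto.
  - rewrite set_slot_neq, !set_slot_eq by lia. reflexivity.
  - intros a H1 H2. rewrite !set_slot_neq; auto.
Qed.

Lemma vip_lin_units n a x b y : unit_vec n x -> unit_vec n y ->
  vip n (vlin a x b y) (vlin a x b y) = a * a + 2 * a * b * vip n x y + b * b.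
Proof.
  intros Hx Hy. rewrite vip_lin_l, !vip_lin_r, (vip_sym n y x).
  change (vip n x x = 1) in Hx. change (vip n y y = 1) in Hy. rewrite Hx, Hy. ring.
Qed.

Definition pair_form d n q xs k (u v : nat -> R) := mform d n q (set_slot (set_slot xs k u) (S k) v).

Lemma pair_form_lin_l d n q xs k a u b u' v : (S k < d)%nat ->
  pair_form d n q xs k (vlin a u b u') v = a * pair_form d n q xs k u v + b * pair_form d n q xs k u' v.
Proof. intros Hk. unfold pair_form. rewrite !(set_slot_comm _ k (S k)) by lia. apply mform_lin. lia. Qed.

Lemma pair_form_lin_r d n q xs k a u b u' v : (S k < d)%nat ->
  pair_form d n q xs k v (vlin a u b u') = a * pair_form d n q xs k v u + b * pair_form d n q xs k v u'.
Proof. intros Hk. unfold pair_form. apply mform_lin. lia. Qed.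

Lemma pair_form_sym d n q xs k u v : is_sym d n q -> (S k < d)%nat ->
  pair_form d n q xs k u v = pair_form d n q xs k v u.
Proof.
  intros Hq Hk. unfold pair_form. rewrite <- (mform_swap_slots d n q _ k Hq Hk). f_equal.
  extensionality p. unfold swap_slots, set_slot.
  destruct (Nat.eqb_spec p k), (Nat.eqb_spec p (S k)), (Nat.eqb_spec k k),
    (Nat.eqb_spec (S k) (S k)), (Nat.eqb_spec k (S k)), (Nat.eqb_spec (S k) k); subst; auto; lia.
Qed.

Lemma pair_form_diag d n q xs k : pair_form d n q xs k (xs k) (xs (S k)) = mform d n q xs.
Proof. unfold pair_form. now rewrite !set_slot_same. Qed.

Section Polarization.

Variables (d n : nat) (q : tensor) (xs : nat -> nat -> R) (k : nat).
Hypothesis (Hk : (S k < d)%nat) (Hu : unit_tuple d n xs).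
Hypothesis (Hc : Rabs (vip n (xs k) (xs (S k))) < 1).

Let x := xs k.
Let y := xs (S k).
Let c := vip n x y.
Let a := / sqrt (2 + 2 * c).
Let b := / sqrt (2 - 2 * c).
Let wp := vlin a x a y.
Let wm := vlin b x (- b) y.
Let nwm := vlin (- b) x b y.
Let ysp := set_slot (set_slot xs k wp) (S k) wp.
Let ysm := set_slot (set_slot xs k wm) (S k) nwm.

Lemma polar_c_bounds : -1 < c < 1.
Proof. apply Rabs_def2 in Hc. unfold c, x, y. lra. Qed.

(* The normalizations [a = 1/|x+y|], [b = 1/|x-y|] in terms of the weights [(1±c)/2]. *)
Lemma polar_weights : (1 + c) / 2 * (a * a) = / 4 /\ (1 - c) / 2 * (b * b) = / 4.
Proof.
  pose proof polar_c_bounds.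
  unfold a, b. rewrite <- !Rinv_mult, !sqrt_sqrt by lra. split; field; lra.
Qed.

Lemma polar_unit_vectors : unit_vec n wp /\ unit_vec n wm /\ unit_vec n nwm.
Proof.
  pose proof polar_c_bounds as Hc1. destruct polar_weights as [Ha Hb].
  assert (Hx : unit_vec n x) by (apply Hu; lia). assert (Hy : unit_vec n y) by (apply Hu; lia).
  assert (Hwm : forall s, s * s = 1 -> unit_vec n (vlin (s * b) x (- (s * b)) y)).
  { intros s Hs. unfold unit_vec. change (vip n (vlin (s * b) x (- (s * b)) y) (vlin (s * b) x (- (s * b)) y) = 1).
    rewrite vip_lin_units by auto. fold c.
    replace (s * b * (s * b) + 2 * (s * b) * - (s * b) * c + - (s * b) * - (s * b))
      with ((s * s) * (4 * ((1 - c) / 2 * (b * b)))) by field. rewrite Hs. lra. }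
  split; [|split].
  - unfold unit_vec. change (vip n wp wp = 1). unfold wp. rewrite vip_lin_units by auto. fold c.
    replace (a * a + 2 * a * a * c + a * a) with (4 * ((1 + c) / 2 * (a * a))) by field. lra.
  - unfold wm. replace b with (1 * b) by ring. apply Hwm; ring.
  - unfold nwm. replace (vlin (- b) x b y) with (vlin (-1 * b) x (- (-1 * b)) y)
      by (extensionality i; unfold vlin; ring). apply Hwm; ring.
Qed.

Lemma polar_unit : unit_tuple d n ysp /\ unit_tuple d n ysm.
Proof.
  destruct polar_unit_vectors as [Hwp [Hwm Hnwm]].
  split; repeat apply unit_tuple_set_slot; auto.
Qed.

Lemma polar_mform_avg : is_sym d n q ->
  (1 + c) / 2 * mform d n q ysp + (1 - c) / 2 * mform d n q ysm = mform d n q xs.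
Proof.
  intros Hq. destruct polar_weights as [Ha Hb].
  set (Bxx := pair_form d n q xs k x x). set (Byy := pair_form d n q xs k y y).
  set (Bxy := pair_form d n q xs k x y).
  assert (Byx : pair_form d n q xs k y x = Bxy) by (apply pair_form_sym; auto).
  assert (Tp : mform d n q ysp = a * a * (Bxx + 2 * Bxy + Byy)).
  { change (mform d n q ysp) with (pair_form d n q xs k wp wp). unfold wp.
    rewrite pair_form_lin_l, !pair_form_lin_r by auto. fold Bxx Byy Bxy. rewrite Byx. ring. }
  assert (Tm : mform d n q ysm = - (b * b) * (Bxx - 2 * Bxy + Byy)).
  { change (mform d n q ysm) with (pair_form d n q xs k wm nwm). unfold wm, nwm.
    rewrite pair_form_lin_l, !pair_form_lin_r by auto. fold Bxx Byy Bxy. rewrite Byx. ring. }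
  rewrite Tp, Tm, <- (pair_form_diag d n q xs k). fold x y Bxy.
  transitivity (((1 + c) / 2 * (a * a)) * (Bxx + 2 * Bxy + Byy)
                - ((1 - c) / 2 * (b * b)) * (Bxx - 2 * Bxy + Byy)); [ring|].
  rewrite Ha, Hb. field.
Qed.

(* The penalty in terms of the order-2 tensors [x^{⊗2}, y^{⊗2}, w±^{⊗2}] and the Gram tensor
   [Z] of the remaining slots. *)
Let X := outer (fun _ => x).
Let Y := outer (fun _ => y).
Let Wp := outer (fun _ => wp).
Let Wm := outer (fun _ => wm).
Let Z := tsub (tsub (gram d xs) X) Y.

Lemma polar_gram : teq 2 n (gram d ysp) (tadd Z (tscale 2 Wp)) /\ teq 2 n (gram d ysm) (tadd Z (tscale 2 Wm)).
Proof.
  split; intros l Hl; [unfold ysp | unfold ysm]; rewrite gram_set_pair by auto; fold x y.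
  - unfold Z, tadd, tsub, tscale, X, Y, Wp. ring.
  - destruct (idx2 n l Hl) as [i [j ->]]. unfold Z, tadd, tsub, tscale, X, Y, Wm, outer. simpl.
    unfold nwm, wm, vlin. ring.
Qed.

Lemma polar_squares_avg :
  teq 2 n (tadd (tscale ((1 + c) / 2) Wp) (tscale ((1 - c) / 2) Wm)) (tscale (1 / 2) (tadd X Y)).
Proof.
  destruct polar_weights as [Ha Hb]. intros l Hl. destruct (idx2 n l Hl) as [i [j ->]].
  unfold tadd, tscale, Wp, Wm, X, Y, outer. simpl. unfold wp, wm, vlin.
  transitivity (((1 + c) / 2 * (a * a)) * ((x i + y i) * (x j + y j))
                + ((1 - c) / 2 * (b * b)) * ((x i - y i) * (x j - y j))); [ring|].
  rewrite Ha, Hb. field.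
Qed.

Lemma polar_potential_avg :
  (1 + c) / 2 * potential d n ysp + (1 - c) / 2 * potential d n ysm = potential d n xs + 2 * (1 - c * c).
Proof.
  destruct polar_unit_vectors as [Uwp [Uwm _]]. destruct polar_gram as [EP EM].
  assert (Hx : vip n x x = 1) by (apply Hu; lia). assert (Hy : vip n y y = 1) by (apply Hu; lia).
  assert (XX : frob_ip 2 n X X = 1) by (unfold X; rewrite ip_outer2, Hx; ring).
  assert (YY : frob_ip 2 n Y Y = 1) by (unfold Y; rewrite ip_outer2, Hy; ring).
  assert (XY : frob_ip 2 n X Y = c * c) by (unfold X, Y; rewrite ip_outer2; reflexivity).
  assert (PP : frob_ip 2 n Wp Wp = 1) by (unfold Wp; rewrite ip_outer2, (Uwp : vip n wp wp = 1); ring).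
  assert (MM : frob_ip 2 n Wm Wm = 1) by (unfold Wm; rewrite ip_outer2, (Uwm : vip n wm wm = 1); ring).
  assert (RW : (1 + c) / 2 * frob_ip 2 n Z Wp + (1 - c) / 2 * frob_ip 2 n Z Wm
               = / 2 * (frob_ip 2 n Z X + frob_ip 2 n Z Y)).
  { pose proof (ip_ext 2 n Z Z _ _ (fun l _ => eq_refl) polar_squares_avg) as H.
    rewrite ip_add_r, !ip_scale_r, ip_add_r in H. lra. }
  unfold potential. rewrite (ip_ext 2 n _ _ _ _ EP EP), (ip_ext 2 n _ _ _ _ EM EM).
  rewrite (ip_ext 2 n (gram d xs) (tadd (tadd Z X) Y) (gram d xs) (tadd (tadd Z X) Y))
    by (intros l _; unfold Z, tadd, tsub; ring).
  rewrite !ip_add_l, !ip_add_r, !ip_scale_l, !ip_scale_r, XX, YY, PP, MM.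
  rewrite (ip_sym 2 n Wp Z), (ip_sym 2 n Wm Z), (ip_sym 2 n X Z), (ip_sym 2 n Y Z), (ip_sym 2 n Y X), XY.
  transitivity (frob_ip 2 n Z Z + 4 * ((1 + c) / 2 * frob_ip 2 n Z Wp + (1 - c) / 2 * frob_ip 2 n Z Wm)
                + 4); [field|].
  rewrite RW. field.
Qed.

Lemma polarize kap : is_sym d n q -> 0 <= kap ->
  exists ys, unit_tuple d n ys /\
    penalized d n q kap ys >= penalized d n q kap xs + 2 * kap * (1 - c * c).
Proof.
  intros Hq Hkap. pose proof polar_c_bounds. pose proof polar_unit as [Up Um].
  assert (WE : (1 + c) / 2 * penalized d n q kap ysp + (1 - c) / 2 * penalized d n q kap ysm
               = penalized d n q kap xs + 2 * kap * (1 - c * c)).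
  { unfold penalized. rewrite <- (polar_mform_avg Hq).
    transitivity ((1 + c) / 2 * mform d n q ysp + (1 - c) / 2 * mform d n q ysm
      + kap * ((1 + c) / 2 * potential d n ysp + (1 - c) / 2 * potential d n ysm)); [ring|].
    rewrite polar_potential_avg. ring. }
  destruct (Rle_dec (penalized d n q kap xs + 2 * kap * (1 - c * c)) (penalized d n q kap ysp)) as [L|L].
  - exists ysp; split; auto. lra.
  - exists ysm; split; auto. apply Rnot_le_lt in L.
    assert ((1 + c) / 2 * penalized d n q kap ysp <
            (1 + c) / 2 * (penalized d n q kap xs + 2 * kap * (1 - c * c))) by (apply Rmult_lt_compat_l; lra).
    apply Rle_ge, (Rmult_le_reg_l ((1 - c) / 2)); lra.
Qed.

End Polarization.

Definition sign_of (c : R) : R := if Rle_dec 0 c then 1 else -1.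

Lemma sign_of_sq c : sign_of c * sign_of c = 1.
Proof. unfold sign_of; destruct Rle_dec; ring. Qed.

Lemma sign_of_mul c : sign_of c * c = Rabs c.
Proof. unfold sign_of, Rabs; destruct Rle_dec, Rcase_abs; lra. Qed.

(* [chain_sign xs k = Π_{j<k} sign <xs j, xs (j+1)>], the sign relating [xs k] to [xs 0]. *)
Fixpoint chain_sign n xs (k : nat) : R :=
  match k with O => 1 | S k' => chain_sign n xs k' * sign_of (vip n (xs k') (xs (S k'))) end.

Lemma chain_sign_sq n xs k : chain_sign n xs k * chain_sign n xs k = 1.
Proof.
  induction k; simpl; [ring|].
  transitivity ((chain_sign n xs k * chain_sign n xs k) *
                (sign_of (vip n (xs k) (xs (S k))) * sign_of (vip n (xs k) (xs (S k))))); [ring|].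
  rewrite IHk, sign_of_sq; ring.
Qed.

Lemma chain_dist d n xs beta : unit_tuple d n xs -> 0 <= beta ->
  (forall k, (S k < d)%nat -> 1 - vip n (xs k) (xs (S k)) * vip n (xs k) (xs (S k)) <= beta * beta / 2) ->
  forall k, (k < d)%nat -> vnorm n (vlin 1 (xs k) (- chain_sign n xs k) (xs O)) <= INR k * beta.
Proof.
  intros Hu Hb Hc. induction k as [|k IH]; intros Hk.
  - simpl. rewrite (vnorm_ext n _ (fun _ => 0)), vnorm_zero_vec by (intros; unfold vlin; ring). lra.
  - set (cc := vip n (xs k) (xs (S k))). set (s := sign_of cc).
    assert (Hs : Rabs s = 1) by (apply sign_abs, sign_of_sq).
    assert (Hstep : vnorm n (vlin 1 (xs (S k)) (- s) (xs k)) <= beta).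
    { apply vnorm_le_of_sq; auto. rewrite vip_lin_units by (apply Hu; lia).
      rewrite (vip_sym n (xs (S k))). fold cc.
      pose proof (sign_of_mul cc). pose proof (sign_of_sq cc). fold s in H, H0.
      pose proof (Hc k Hk). fold cc in H1.
      pose proof (unit_vip_bound n (xs k) (xs (S k)) (Hu k ltac:(lia)) (Hu (S k) Hk)). fold cc in H2.
      assert (cc * cc = Rabs cc * Rabs cc) by (rewrite <- Rabs_mult, Rabs_pos_eq; nra).
      pose proof (Rabs_pos cc). nra. }
    rewrite (vnorm_ext n _ (vlin 1 (vlin 1 (xs (S k)) (- s) (xs k)) s (vlin 1 (xs k) (- chain_sign n xs k) (xs O))))
      by (intros i _; unfold vlin, s, cc; simpl; ring).
    pose proof (vnorm_triangle n 1 (vlin 1 (xs (S k)) (- s) (xs k)) s (vlin 1 (xs k) (- chain_sign n xs k) (xs O))).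
    rewrite Rabs_R1, Hs in H. pose proof (IH ltac:(lia)). rewrite S_INR. lra.
Qed.

Definition align_prefix n xs (j : nat) : nat -> nat -> R :=
  fun m => if Nat.ltb m j then (fun i => chain_sign n xs m * xs O i) else xs m.

Lemma align_prefix_unit d n xs j : (1 <= d)%nat -> unit_tuple d n xs -> unit_tuple d n (align_prefix n xs j).
Proof.
  intros Hd Hu m Hm. unfold align_prefix. destruct (Nat.ltb m j); auto.
  apply unit_vec_scale. rewrite chain_sign_sq, Rmult_1_l. apply Hu; lia.
Qed.

Lemma align_prefix_S n xs j :
  align_prefix n xs (S j) = set_slot (align_prefix n xs j) j (fun i => chain_sign n xs j * xs O i).
Proof.
  extensionality m. unfold align_prefix, set_slot. destruct (Nat.eqb_spec m j).
  - subst. now rewrite (proj2 (Nat.ltb_lt j (S j))) by lia.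
  - destruct (Nat.ltb_spec m (S j)), (Nat.ltb_spec m j); auto; lia.
Qed.

Lemma align_prefix_keep n xs j : set_slot (align_prefix n xs j) j (xs j) = align_prefix n xs j.
Proof.
  extensionality m. unfold set_slot, align_prefix.
  destruct (Nat.eqb_spec m j); subst; auto. now rewrite Nat.ltb_irrefl.
Qed.

(* Aligning one slot at a time moves the form by at most [||q||_2 · D] per slot. *)
Lemma align_prefix_close d n q xs D : (1 <= n)%nat -> unit_tuple d n xs -> 0 <= D ->
  (forall k, (k < d)%nat -> vnorm n (vlin 1 (xs k) (- chain_sign n xs k) (xs O)) <= D) ->
  forall j, (j <= d)%nat ->
    Rabs (mform d n q (align_prefix n xs j) - mform d n q xs) <= spec_norm d n q * INR j * D.
Proof.
  intros Hn Hu HD HB. induction j as [|j IH]; intros Hj.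
  - replace (align_prefix n xs 0) with xs by (extensionality m; reflexivity).
    simpl. rewrite Rminus_diag, Rabs_R0. lra.
  - set (v := fun i => 1 * (fun i => chain_sign n xs j * xs O i) i + -1 * xs j i).
    assert (E : mform d n q (align_prefix n xs (S j)) - mform d n q (align_prefix n xs j) =
                mform d n q (set_slot (align_prefix n xs j) j v)).
    { unfold v. rewrite mform_lin, <- align_prefix_S, align_prefix_keep by lia. ring. }
    assert (Hv : vnorm n v <= D).
    { rewrite (vnorm_ext n _ (vlin (-1) (vlin 1 (xs j) (- chain_sign n xs j) (xs O)) 0 (xs O)))
        by (intros; unfold v, vlin; ring).
      pose proof (vnorm_triangle n (-1) (vlin 1 (xs j) (- chain_sign n xs j) (xs O)) 0 (xs O)).
      rewrite Rabs_R0, Rabs_left in H by lra. pose proof (HB j ltac:(lia)). lra. }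
    pose proof (mform_slot_abs_le d n q (align_prefix n xs j) j v Hn ltac:(lia) (align_prefix_unit d n xs j ltac:(lia) Hu)).
    rewrite <- E in H. pose proof (IH ltac:(lia)). pose proof (spec_nonneg d n q Hn ltac:(lia)).
    assert (spec_norm d n q * vnorm n v <= spec_norm d n q * D) by (apply Rmult_le_compat_l; auto).
    rewrite S_INR.
    replace (mform d n q (align_prefix n xs (S j)) - mform d n q xs) with
      ((mform d n q (align_prefix n xs (S j)) - mform d n q (align_prefix n xs j)) +
       (mform d n q (align_prefix n xs j) - mform d n q xs)) by ring.
    eapply Rle_trans; [apply Rabs_triang | lra].
Qed.

Lemma align_prefix_full d n q xs :
  mform d n q (align_prefix n xs d) = prodR d (chain_sign n xs) * mform d n q (fun _ => xs O).
Proof.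
  unfold mform, frob_ip, outer. rewrite <- lsum_scal. apply lsum_ext. intros l Hl.
  apply In_idx in Hl as [Hlen _].
  rewrite (outer_from_ext (align_prefix n xs d) (fun m i => chain_sign n xs m * (fun _ => xs O) m i)),
    outer_from_scale, Hlen.
  { change (prodR d (fun k => chain_sign n xs (0 + k)%nat)) with (prodR d (chain_sign n xs)).
    change (fun (_ : nat) (i : nat) => xs O i) with (fun _ : nat => xs O). ring. }
  intros m _ Hm. rewrite Hlen in Hm. unfold align_prefix.
  now rewrite (proj2 (Nat.ltb_lt m d)) by (simpl in Hm; lia).
Qed.

Lemma prodR_signs_sq d f : (forall k, f k * f k = 1) -> prodR d f * prodR d f = 1.
Proof. intros H. rewrite <- prodR_mult. apply prodR_one. intros; apply H. Qed.

Lemma aligned_tuple_close d n q xs beta : (1 <= n)%nat -> unit_tuple d n xs -> 0 <= beta ->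
  (forall k, (S k < d)%nat -> 1 - vip n (xs k) (xs (S k)) * vip n (xs k) (xs (S k)) <= beta * beta / 2) ->
  exists s, s * s = 1 /\
    Rabs (mform d n q xs - s * mform d n q (fun _ => xs O)) <= spec_norm d n q * INR d * (INR d * beta).
Proof.
  intros Hn Hu Hb Hc. exists (prodR d (chain_sign n xs)).
  split; [apply prodR_signs_sq, chain_sign_sq|].
  rewrite <- align_prefix_full, Rabs_minus_sym. apply (align_prefix_close d n q xs); auto.
  - apply Rmult_le_pos; [apply pos_INR | auto].
  - intros k Hk. pose proof (chain_dist d n xs beta Hu Hb Hc k Hk).
    assert (INR k <= INR d) by (apply le_INR; lia). nra.
Qed.

Lemma near_max_aligned d n q kap beta m xs : is_sym d n q -> 0 < kap ->
  (forall ys, unit_tuple d n ys -> penalized d n q kap ys <= m) -> unit_tuple d n xs ->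
  m - kap * beta * beta < penalized d n q kap xs ->
  forall k, (S k < d)%nat -> 1 - vip n (xs k) (xs (S k)) * vip n (xs k) (xs (S k)) <= beta * beta / 2.
Proof.
  intros Hq Hkap Hm Hu Hxs k Hk. set (c := vip n (xs k) (xs (S k))).
  destruct (Rlt_le_dec (Rabs c) 1) as [L|L].
  - destruct (polarize d n q xs k Hk Hu L kap Hq ltac:(lra)) as [ys [Hys Hp]].
    pose proof (Hm ys Hys). fold c in Hp. nra.
  - pose proof (unit_vip_bound n (xs k) (xs (S k)) (Hu k ltac:(lia)) (Hu (S k) Hk)). fold c in H.
    assert (c * c = Rabs c * Rabs c) by (rewrite <- Rabs_mult, Rabs_pos_eq; nra). nra.
Qed.

Lemma penalized_sup d n q kap : (1 <= n)%nat -> 0 <= kap -> exists m,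
  (forall ys, unit_tuple d n ys -> penalized d n q kap ys <= m) /\
  (forall theta, 0 < theta -> exists xs, unit_tuple d n xs /\ m - theta < penalized d n q kap xs).
Proof.
  intros Hn Hkap. set (E := fun v => exists xs, unit_tuple d n xs /\ v = penalized d n q kap xs).
  assert (Hu0 : unit_tuple d n (fun _ => basis_vec 0)) by (intros j _; apply basis_vec_unit; lia).
  destruct (sup_exists E (frob d n q + kap * (INR d * INR d)) (penalized d n q kap (fun _ => basis_vec 0)))
    as [m Hm].
  - exists (fun _ => basis_vec 0); auto.
  - intros v [xs [Hu ->]]. unfold penalized. pose proof (ip_le d n q (outer xs)).
    rewrite frob_outer_unit in H by auto. pose proof (potential_bound d n xs Hu). unfold mform. nra.
  - exists m. split.
    + intros ys Hys. apply Hm. exists ys; auto.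
    + intros theta Ht. destruct (lub_approx E m theta Hm Ht) as [v [[xs [Hu ->]] Hv]]. eauto.
Qed.

Theorem banach_approx d n q eta : is_sym d n q -> (1 <= n)%nat -> (1 <= d)%nat -> eta > 0 ->
  exists x s, unit_vec n x /\ s * s = 1 /\ spec_norm d n q - eta < s * mform d n q (fun _ => x).
Proof.
  intros Hq Hn Hd He. set (N := spec_norm d n q). set (D := INR d).
  assert (HN : 0 <= N) by (apply spec_nonneg; auto).
  assert (HD : 1 <= D) by (unfold D; apply (le_INR 1 d) in Hd; simpl in Hd; lra).
  set (kap := eta / (3 * (D * D + 2))).
  assert (Hk : kap * (D * D + 2) = eta / 3) by (unfold kap; field; nra).
  assert (Hk0 : 0 < kap) by (unfold kap; apply Rdiv_lt_0_compat; nra).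
  set (beta := Rmin 1 (eta / (3 * (N * D * D + 1)))).
  assert (Hb0 : 0 < beta) by (unfold beta; apply Rmin_pos; [lra | apply Rdiv_lt_0_compat; nra]).
  assert (Hb1 : beta <= 1) by apply Rmin_l.
  assert (Hb2 : beta * (N * D * D + 1) <= eta / 3).
  { pose proof (Rmin_r 1 (eta / (3 * (N * D * D + 1)))). fold beta in H.
    apply (Rmult_le_compat_r (N * D * D + 1)) in H; [|nra].
    replace (eta / (3 * (N * D * D + 1)) * (N * D * D + 1)) with (eta / 3) in H by (field; nra). lra. }
  set (theta := kap * beta * beta).
  assert (Ht : 0 < theta <= kap).
  { assert (0 < beta * beta <= 1) by (split; nra).
    assert (kap * (beta * beta) <= kap * 1) by (apply Rmult_le_compat_l; lra).
    assert (0 < kap * (beta * beta)) by (apply Rmult_lt_0_compat; lra).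
    unfold theta. split; lra. }
  destruct (penalized_sup d n q kap Hn ltac:(lra)) as [m [Hmax Happrox]].
  destruct (Happrox theta ltac:(lra)) as [xs [Hu Hv]].
  destruct (aligned_tuple_close d n q xs beta Hn Hu ltac:(lra)
              (near_max_aligned d n q kap beta m xs Hq Hk0 Hmax Hu Hv)) as [s [Hs Hclose]].
  fold N D in Hclose.
  destruct (spec_approx d n q theta Hn ltac:(lra)) as [zs [Hzs Hz]]. fold N in Hz.
  pose proof (Hmax zs Hzs). pose proof (potential_nonneg d n zs). pose proof (potential_bound d n xs Hu).
  fold D in H1. unfold penalized in *.
  exists (xs O), s. split; [apply Hu; lia | split; auto].
  pose proof (Rle_abs (mform d n q xs - s * mform d n q (fun _ => xs O))).
  assert (N * D * (D * beta) <= eta / 3) by nra. nra.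
Qed.

Lemma inv_succ_pos j : 0 < / (INR j + 1).
Proof. apply Rinv_0_lt_compat. pose proof (pos_INR j). lra. Qed.

Lemma inv_succ_small e : 0 < e -> exists N, forall j, (j >= N)%nat -> / (INR j + 1) < e.
Proof.
  intros He. destruct (archimed_cor1 e He) as [N [H1 H2]]. exists N. intros j Hj.
  apply le_INR in Hj. assert (0 < INR N) by (apply lt_0_INR; lia).
  eapply Rle_lt_trans; [|exact H1]. apply Rinv_le_contravar; lra.
Qed.

Lemma inv_succ_cv : Un_cv (fun j => / (INR j + 1)) 0.
Proof.
  intros e He. destruct (inv_succ_small e He) as [N HN]. exists N. intros j Hj.
  unfold Rdist. rewrite Rminus_0_r, Rabs_pos_eq by (left; apply inv_succ_pos). auto.
Qed.

Lemma cv_const c : Un_cv (fun _ => c) c.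
Proof. intros e He. exists 0%nat. intros. unfold Rdist. rewrite Rminus_diag, Rabs_R0. lra. Qed.

Lemma cv_lsum {A} (s : list A) (f : nat -> A -> R) F :
  (forall x, In x s -> Un_cv (fun j => f j x) (F x)) -> Un_cv (fun j => lsum s (f j)) (lsum s F).
Proof.
  induction s as [|a s IH]; intros H; [apply (cv_const 0)|]. rewrite lsum_cons.
  apply (Un_cv_ext (fun j => f j a + lsum s (f j))); [intros; now rewrite lsum_cons|].
  apply CV_plus; [apply H; now left | apply IH; intros; apply H; now right].
Qed.

Lemma cv_outer (y : nat -> nat -> R) Y k l : (forall i, In i l -> Un_cv (fun j => y j i) (Y i)) ->
  Un_cv (fun j => outer_from (fun _ => y j) k l) (outer_from (fun _ => Y) k l).
Proof.
  revert k; induction l; intros k H; simpl; [apply cv_const|].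
  apply CV_mult; [apply H; now left | apply IHl; intros; apply H; now right].
Qed.

Lemma cv_prodR_const (a : nat -> R) A m : Un_cv a A -> Un_cv (fun j => prodR m (fun _ => a j)) (prodR m (fun _ => A)).
Proof. intros H. induction m; simpl; [apply cv_const | apply CV_mult; auto]. Qed.

Lemma tconv_ip d n P Q p q : tconv d n P p -> tconv d n Q q ->
  Un_cv (fun j => frob_ip d n (P j) (Q j)) (frob_ip d n p q).
Proof. intros HP HQ. apply cv_lsum. intros l Hl. apply CV_mult; apply (tconv_entry d n); auto. Qed.

(* The spectral norm is continuous (it is 1-Lipschitz). *)
Lemma tconv_spec d n P p : (1 <= n)%nat -> tconv d n P p ->
  Un_cv (fun j => spec_norm d n (P j)) (spec_norm d n p).
Proof.
  intros Hn H e He. destruct (H e He) as [N HN]. exists N. intros j Hj. unfold Rdist.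
  pose proof (spec_lipschitz d n (P j) p Hn). specialize (HN j Hj). lra.
Qed.

Lemma tconv_close d n G W L : tconv d n G L ->
  (forall j, frob d n (tsub (G j) (W j)) <= / (INR j + 1)) -> tconv d n W L.
Proof.
  intros HG HW e He. destruct (HG (e / 2) ltac:(lra)) as [N1 HN1].
  destruct (inv_succ_small (e / 2) ltac:(lra)) as [N2 HN2].
  exists (Nat.max N1 N2). intros j Hj. pose proof (frob_dist_triangle d n (W j) (G j) L).
  pose proof (HW j). rewrite frob_sub_sym in H0.
  specialize (HN1 j ltac:(lia)). specialize (HN2 j ltac:(lia)). lra.
Qed.

Lemma tconv_const d n p : tconv d n (fun _ => p) p.
Proof.
  intros e He. exists 0%nat. intros. rewrite (frob_ext d n _ tzero), frob_zero by (intros l _; unfold tsub, tzero; ring).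
  lra.
Qed.

(** The set of [±x^{⊗d}] with [x] a unit vector is closed.

    For [W = s x^{⊗d}] and a fixed tail [rest], the row [y = W(·, rest)] is a multiple of
    [x], and [W_l W_l' |y|^{2d} = y^{⊗d}_l y^{⊗d}_l'].  This identity passes to limits and
    characterizes multiples of [(y/|y|)^{⊗d}] among tensors with [L(·, rest) ≠ 0]. *)

Lemma prodR_const_mult m a b : prodR m (fun _ => a) * prodR m (fun _ => b) = prodR m (fun _ => a * b).
Proof. rewrite <- prodR_mult. reflexivity. Qed.

Lemma outer_const_scale (x : nat -> R) c l :
  outer (fun _ i => c * x i) l = prodR (length l) (fun _ => c) * outer (fun _ => x) l.
Proof. apply (outer_from_scale (fun _ => x) (fun _ => c)). Qed.

Lemma sym_rank1_row_identity d n x s rest l l' : unit_vec n x -> s * s = 1 -> length l = d -> length l' = d ->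
  let W := sym_rank1 x s in let y := fun i => W (i :: rest) in
  W l * W l' * prodR d (fun _ => vip n y y) = outer (fun _ => y) l * outer (fun _ => y) l'.
Proof.
  intros Hx Hs Hl Hl' W y. set (pi := outer (fun _ => x) rest).
  assert (Ey : y = fun i => (s * pi) * x i).
  { extensionality i. unfold y, W, sym_rank1, tscale, outer. simpl.
    unfold pi, outer. rewrite (outer_from_const_shift x 1 0). ring. }
  assert (EN : vip n y y = (s * s) * (pi * pi)).
  { rewrite Ey. unfold vip, sum_ip.
    rewrite (lsum_ext _ _ (fun i => (s * s * (pi * pi)) * (x i * x i))), lsum_scal by (intros; ring).
    change (lsum (seq 0 n) (fun i => x i * x i)) with (vip n x x). rewrite (Hx : vip n x x = 1). ring. }
  assert (E2 : prodR d (fun _ => s * pi) * prodR d (fun _ => s * pi) = prodR d (fun _ => pi * pi)).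
  { rewrite prodR_const_mult. apply prodR_ext. intros.
    transitivity ((s * s) * (pi * pi)); [ring | rewrite Hs; ring]. }
  rewrite EN, Hs, Rmult_1_l, Ey, !outer_const_scale, Hl, Hl', <- E2.
  unfold W, sym_rank1, tscale.
  transitivity ((s * s) * (outer (fun _ => x) l * outer (fun _ => x) l') *
                (prodR d (fun _ => s * pi) * prodR d (fun _ => s * pi))); [ring|].
  rewrite Hs. ring.
Qed.

Lemma rank1_of_row_identity d n L i0 rest : In (i0 :: rest) (idx d n) -> L (i0 :: rest) <> 0 ->
  let y := fun i => L (i :: rest) in
  (forall l l', In l (idx d n) -> In l' (idx d n) ->
     L l * L l' * prodR d (fun _ => vip n y y) = outer (fun _ => y) l * outer (fun _ => y) l') ->
  exists x s, unit_vec n x /\ s * s = 1 /\ teq d n L (sym_rank1 x s).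
Proof.
  intros Hl0 HL0 y ID. set (N := vip n y y). set (l0 := i0 :: rest).
  assert (HN : 0 < N).
  { assert (y i0 * y i0 <= N).
    { apply (lsum_ge_term (seq 0 n) (fun i => y i * y i)); [intros x _; apply (Rle_0_sqr (y x))|].
      apply In_idx in Hl0 as [_ F]. inversion F; subst. apply in_seq; lia. }
    assert (0 < y i0 * y i0) by (apply Rsqr_pos_lt; auto). lra. }
  set (PN := prodR d (fun _ => N)). assert (HPN : 0 < PN) by (apply prodR_const_pos; auto).
  set (P := fun l => outer (fun _ => y) l).
  assert (I0 : L l0 * L l0 * PN = P l0 * P l0) by (apply ID; auto).
  assert (HLL : 0 < L l0 * L l0) by (apply Rsqr_pos_lt; auto).
  assert (HP0 : P l0 <> 0) by (intro E; rewrite E in I0; nra).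
  set (kap := P l0 / (L l0 * PN)).
  assert (HLk : forall l, In l (idx d n) -> L l = kap * P l).
  { intros l Hl. pose proof (ID l l0 Hl Hl0) as H. fold N PN in H. unfold kap.
    field_simplify_eq; [unfold P; rewrite H; ring | split; [lra | exact HL0]]. }
  set (sN := vnorm n y). assert (HsN : 0 < sN) by (apply sqrt_lt_R0; auto).
  set (yh := fun i => y i / sN).
  assert (HPy : forall l, length l = d -> P l = prodR d (fun _ => sN) * outer (fun _ => yh) l).
  { intros l Hl. unfold P. rewrite <- Hl, <- outer_const_scale. f_equal.
    extensionality m; extensionality i. unfold yh. field. lra. }
  exists yh, (kap * prodR d (fun _ => sN)). split; [apply unit_vec_normalize, Rgt_not_eq, HsN | split].
  - transitivity (kap * kap * (prodR d (fun _ => sN) * prodR d (fun _ => sN))); [ring|].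
    rewrite prodR_const_mult. unfold sN. rewrite vnorm_sq. fold N PN. unfold kap.
    transitivity (P l0 * P l0 / (L l0 * L l0 * PN)); [field; split; [lra | exact HL0] |].
    rewrite <- I0. field. split; [lra | exact HL0].
  - intros l Hl. rewrite HLk, HPy by (auto; apply In_idx in Hl; tauto).
    unfold sym_rank1, tscale. ring.
Qed.

(* Limits of tensors [s_j x_j^{⊗d}] are again of this form (a unit tensor limit has a
   nonzero entry, and the quadratic identity passes to the limit). *)
Lemma sym_rank1_closed d n (xk : nat -> nat -> R) (sk : nat -> R) L : (1 <= d)%nat ->
  (forall j, unit_vec n (xk j) /\ sk j * sk j = 1) -> tconv d n (fun j => sym_rank1 (xk j) (sk j)) L ->
  exists x s, unit_vec n x /\ s * s = 1 /\ teq d n L (sym_rank1 x s).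
Proof.
  intros Hd Hk Hc. set (W := fun j => sym_rank1 (xk j) (sk j)).
  assert (Hent : forall l, In l (idx d n) -> Un_cv (fun j => W j l) (L l)) by (intros; apply (tconv_entry d n); auto).
  assert (Hnz : exists l0, In l0 (idx d n) /\ L l0 <> 0).
  { apply NNPP. intros Hno. destruct (Hc (1 / 2) ltac:(lra)) as [N HN]. specialize (HN N (le_n N)).
    assert (E : teq d n (tsub (W N) L) (W N)).
    { intros l Hl. unfold tsub. destruct (Req_dec (L l) 0) as [E|E]; [rewrite E; ring|].
      exfalso; apply Hno; eauto. }
    destruct (Hk N) as [Hx Hs]. change (frob d n (tsub (W N) L) < 1 / 2) in HN.
    rewrite (frob_ext _ _ _ _ E) in HN. unfold W in HN. rewrite frob_sym_rank1 in HN by auto. lra. }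
  destruct Hnz as [[|i0 rest] [Hl0 HL0]]; [apply In_idx in Hl0 as [H _]; simpl in H; lia|].
  apply (rank1_of_row_identity d n L i0 rest Hl0 HL0). intros l l' Hl Hl'.
  set (yj := fun j i => W j (i :: rest)).
  assert (Cy : forall i, (i < n)%nat -> Un_cv (fun j => yj j i) (L (i :: rest))).
  { intros i Hi. apply Hent. apply In_idx in Hl0 as [H1 H2]. apply In_idx. split; auto.
    inversion H2; subst. constructor; auto. }
  assert (CN : Un_cv (fun j => vip n (yj j) (yj j)) (vip n (fun i => L (i :: rest)) (fun i => L (i :: rest)))).
  { apply cv_lsum. intros i Hi. apply in_seq in Hi. apply CV_mult; apply Cy; lia. }
  apply In_idx in Hl as [Len1 F1]. apply In_idx in Hl' as [Len2 F2].
  apply (UL_sequence (fun j => W j l * W j l' * prodR d (fun _ => vip n (yj j) (yj j)))).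
  - apply CV_mult; [apply CV_mult; apply Hent; apply In_idx; auto | apply cv_prodR_const; auto].
  - apply (Un_cv_ext (fun j => outer (fun _ => yj j) l * outer (fun _ => yj j) l')).
    + intros j. symmetry. destruct (Hk j). apply sym_rank1_row_identity; auto.
    + apply CV_mult; apply cv_outer; intros i Hi; apply Cy.
      * eapply Forall_forall in F1; eauto.
      * eapply Forall_forall in F2; eauto.
Qed.

(** * Limiting gradients of the spectral norm.

    On the symmetric tensors, every limit of gradients at [p] is a maximizer [s x^{⊗d}] of
    [<p, ·>] (by Banach's theorem a gradient is close to a near-maximizer), and conversely,
    in any subspace containing the relevant lines, every such maximizer is the gradient
    limit along [p + t · s x^{⊗d}], [t -> 0+]. *)

(* A gradient [G] at [q] is [ε]-close to any unit [W] that nearly attains [g q] and is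
   dominated by [g] near [q]: pairing the first-order expansion with [h ∝ W - G]. *)
Lemma grad_close_to_near_max d n (V : tensor -> Prop) (g : tensor -> R) q G W eps delta eta :
  0 < eps -> 0 < delta ->
  (forall h, V h -> frob d n h < delta -> Rabs (g (tadd q h) - g q - frob_ip d n G h) <= eps / 2 * frob d n h) ->
  (forall c, V (tscale c (tsub W G))) -> frob d n W = 1 ->
  (forall h, frob_ip d n (tadd q h) W <= g (tadd q h)) -> g q - eta <= frob_ip d n q W ->
  eta <= delta / (2 * (1 + frob d n G)) * eps * eps / 2 ->
  frob d n (tsub G W) <= eps.
Proof.
  intros He Hdel Hgr HV HW1 Hlow Hnear Heta.
  set (FG := frob d n G). assert (HFG : 0 <= FG) by apply frob_nonneg.
  set (r := delta / (2 * (1 + FG))). assert (Hr : 0 < r) by (unfold r; apply Rdiv_lt_0_compat; lra).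
  set (D := frob d n (tsub W G)). assert (HD0 : 0 <= D) by apply frob_nonneg.
  assert (HD : D <= 1 + FG).
  { unfold D. rewrite (frob_ext d n _ (tadd W (tscale (-1) G))) by (intros l _; unfold tadd, tsub, tscale; ring).
    pose proof (frob_triangle d n W (tscale (-1) G)). rewrite frob_scale, Rabs_left in H by lra.
    unfold FG. lra. }
  set (h := tscale r (tsub W G)).
  assert (Hfh : frob d n h = r * D) by (unfold h, D; rewrite frob_scale, Rabs_pos_eq; lra).
  assert (Hfh2 : frob d n h < delta).
  { rewrite Hfh. assert (r * D <= r * (1 + FG)) by (apply Rmult_le_compat_l; lra).
    assert (r * (1 + FG) = delta / 2) by (unfold r; field; lra). lra. }
  pose proof (Hgr h (HV r) Hfh2) as Hg. pose proof (Hlow h) as Hl. rewrite ip_add_l in Hl.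
  assert (Hip : frob_ip d n h W - frob_ip d n G h = r * (D * D)).
  { unfold h, D. rewrite ip_scale_l, ip_scale_r, frob_sq, !ip_sub_l, !ip_sub_r, (ip_sym d n G W). ring. }
  pose proof (Rle_abs (g (tadd q h) - g q - frob_ip d n G h)).
  assert (Key : r * (D * D) <= eta + eps / 2 * (r * D)) by (rewrite Hfh in Hg; lra).
  rewrite frob_sub_sym. fold D. apply Rnot_lt_le. intros Hlt.
  assert (r * D * (D - eps / 2) > r * eps * (eps / 2)).
  { apply Rmult_gt_0_lt_compat; [nra | nra | nra | lra]. }
  assert (eta <= r * eps * (eps / 2)) by (unfold r, FG; lra). nra.
Qed.

Lemma grad_near_sym_rank1 d n q G eps : (1 <= n)%nat -> (1 <= d)%nat -> is_sym d n q ->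
  is_grad d n (is_sym d n) (spec_norm d n) q G -> eps > 0 ->
  exists x s, unit_vec n x /\ s * s = 1 /\ frob d n (tsub G (sym_rank1 x s)) <= eps /\
    spec_norm d n q - eps <= frob_ip d n q (sym_rank1 x s).
Proof.
  intros Hn Hd Hq [HG Hgr] He. destruct (Hgr (eps / 2) ltac:(lra)) as [delta [Hdel Hh]].
  set (r := delta / (2 * (1 + frob d n G))).
  assert (Hr : 0 < r) by (unfold r; pose proof (frob_nonneg d n G); apply Rdiv_lt_0_compat; lra).
  set (eta := Rmin eps (r * eps * eps / 2)).
  assert (0 < r * eps * eps) by (apply Rmult_lt_0_compat; [apply Rmult_lt_0_compat|]; lra).
  assert (Heta : 0 < eta) by (unfold eta; apply Rmin_pos; lra).
  destruct (banach_approx d n q eta Hq Hn Hd Heta) as [x [s [Hx [Hs HT]]]].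
  rewrite <- ip_sym_rank1 in HT. assert (Heps : eta <= eps) by apply Rmin_l.
  exists x, s. repeat split; auto; [|lra].
  apply (grad_close_to_near_max d n (is_sym d n) (spec_norm d n) q G (sym_rank1 x s) eps delta eta); auto.
  - intros c. apply is_sym_scale, is_sym_sub; auto. apply sym_rank1_sym.
  - apply frob_sym_rank1; auto.
  - intros h. apply sym_rank1_le_spec; auto.
  - lra.
  - apply Rmin_r.
Qed.

Lemma limit_grad_sym_maximizer d n p L : (1 <= n)%nat -> (1 <= d)%nat ->
  limit_grad d n (is_sym d n) (spec_norm d n) p L ->
  exists x s, unit_vec n x /\ s * s = 1 /\ teq d n L (sym_rank1 x s) /\
    frob_ip d n p (sym_rank1 x s) = spec_norm d n p.
Proof.
  intros Hn Hd [ps [Gs [Hk [Cp CG]]]].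
  destruct (choice (fun j (xs : (nat -> R) * R) => unit_vec n (fst xs) /\ snd xs * snd xs = 1 /\
     frob d n (tsub (Gs j) (sym_rank1 (fst xs) (snd xs))) <= / (INR j + 1) /\
     spec_norm d n (ps j) - / (INR j + 1) <= frob_ip d n (ps j) (sym_rank1 (fst xs) (snd xs)))) as [f Hf].
  { intros j. destruct (Hk j) as [Hs Hg].
    destruct (grad_near_sym_rank1 d n (ps j) (Gs j) (/ (INR j + 1)) Hn Hd Hs Hg (inv_succ_pos j))
      as [x [s H]]. exists (x, s). exact H. }
  set (W := fun j => sym_rank1 (fst (f j)) (snd (f j))).
  assert (CW : tconv d n W L) by (apply (tconv_close d n Gs); auto; intros j; apply Hf).
  destruct (sym_rank1_closed d n (fun j => fst (f j)) (fun j => snd (f j)) L Hd) as [x [s [Hx [Hs HL]]]];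
    [intros j; split; apply Hf | exact CW |].
  exists x, s. repeat split; auto. apply Rle_antisym; [apply sym_rank1_le_spec; auto|].
  rewrite <- (ip_ext d n p p L (sym_rank1 x s)) by (auto; intros l _; auto).
  replace (spec_norm d n p) with (spec_norm d n p - 0) by ring.
  apply Rle_cv_lim with (Un := fun j => spec_norm d n (ps j) - / (INR j + 1))
                       (Vn := fun j => frob_ip d n (ps j) (W j)).
  - intros j. apply Hf.
  - apply CV_minus; [apply tconv_spec; auto | apply inv_succ_cv].
  - apply tconv_ip; auto.
Qed.

Lemma spec_upper_near_max d n p u t h : (1 <= n)%nat -> 0 < t -> frob d n u = 1 ->
  (forall xs, unit_tuple d n xs -> mform d n p xs <= frob_ip d n p u) ->
  spec_norm d n (tadd (tadd p (tscale t u)) h) <=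
  frob_ip d n p u + t + frob_ip d n u h + frob d n h * frob d n h / (2 * t).
Proof.
  intros Hn Ht Hu Hmax. apply spec_le; auto. intros xs Hxs.
  set (Z := outer xs). assert (HZ : frob d n Z = 1) by (apply frob_outer_unit; auto).
  unfold mform. fold Z. rewrite !ip_add_l, ip_scale_l.
  pose proof (Hmax xs Hxs) as H1. unfold mform in H1. fold Z in H1.
  set (D := frob d n (tsub Z u)). set (F := frob d n h).
  assert (HD : D * D = 2 - 2 * frob_ip d n u Z).
  { unfold D. rewrite frob_sub_sq, HZ, Hu, (ip_sym d n Z u). ring. }
  assert (H2 : frob_ip d n h Z - frob_ip d n u h <= F * D).
  { rewrite (ip_sym d n u h), <- ip_sub_r. apply ip_le. }
  assert (E : t * frob_ip d n u Z + F * D - F * F / (2 * t) <= t).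
  { apply (Rmult_le_reg_l (2 * t)); [lra|].
    replace (2 * t * (t * frob_ip d n u Z + F * D - F * F / (2 * t)))
      with (2 * t * t - t * t * (D * D) + 2 * t * F * D - F * F) by (rewrite HD; field; lra).
    pose proof (Rle_0_sqr (t * D - F)). unfold Rsqr in H. nra. }
  lra.
Qed.

(* Conversely, in any subspace [V] containing [u = s x^{⊗d}] and the line [p + t u], a maximizer
   [u] of [<p, ·>] is a limiting gradient: [||·||_2] is differentiable at [p + u/(j+1)] with
   gradient [u]. *)
Lemma maximizer_limit_grad d n (V : tensor -> Prop) p x s : (1 <= n)%nat -> (1 <= d)%nat ->
  unit_vec n x -> s * s = 1 ->
  (forall t, V (tadd p (tscale t (sym_rank1 x s)))) -> V (sym_rank1 x s) ->
  frob_ip d n p (sym_rank1 x s) = spec_norm d n p ->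
  limit_grad d n V (spec_norm d n) p (sym_rank1 x s).
Proof.
  intros Hn Hd Hx Hs HV HVu Hmax. set (u := sym_rank1 x s) in *.
  assert (Hu : frob d n u = 1) by (apply frob_sym_rank1; auto).
  assert (Huu : frob_ip d n u u = 1) by (rewrite <- frob_sq, Hu; ring).
  assert (Hm : forall xs, unit_tuple d n xs -> mform d n p xs <= frob_ip d n p u)
    by (intros; rewrite Hmax; apply spec_ge; auto).
  exists (fun j => tadd p (tscale (/ (INR j + 1)) u)), (fun _ => u). split; [|split].
  - intros j. split; auto. set (t := / (INR j + 1)). assert (Ht : 0 < t) by apply inv_succ_pos.
    set (q := tadd p (tscale t u)).
    assert (Hq : spec_norm d n q = frob_ip d n p u + t).
    { apply Rle_antisym.
      - pose proof (spec_upper_near_max d n p u t tzero Hn Ht Hu Hm).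
        rewrite frob_zero, (spec_ext d n _ q) in H by (auto; intros l _; unfold q, tadd, tzero; ring).
        unfold frob_ip at 2 in H. rewrite (lsum_ext _ _ (fun _ => 0)), lsum_zero in H
          by (intros; unfold tzero; ring). lra.
      - pose proof (sym_rank1_le_spec d n q x s Hn Hd Hx Hs). fold u in H.
        unfold q in H at 1. rewrite ip_add_l, ip_scale_l, Huu in H. lra. }
    split; auto. intros eps He. exists (2 * t * eps). split; [apply Rmult_lt_0_compat; lra|].
    intros h Hh Hfh.
    pose proof (spec_upper_near_max d n p u t h Hn Ht Hu Hm) as Up. fold q in Up.
    pose proof (sym_rank1_le_spec d n (tadd q h) x s Hn Hd Hx Hs) as Lo. fold u in Lo.
    unfold q in Lo. rewrite !ip_add_l, ip_scale_l, Huu in Lo. fold q in Lo.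
    rewrite Hq, (ip_sym d n u h) in *. pose proof (frob_nonneg d n h).
    assert (frob d n h * frob d n h / (2 * t) <= eps * frob d n h).
    { apply (Rmult_le_reg_l (2 * t)); [lra|]. field_simplify; [nra | lra]. }
    apply Rabs_le. split; lra.
  - intros e He. destruct (inv_succ_small e He) as [N HN]. exists N. intros j Hj.
    rewrite (frob_ext d n _ (tscale (/ (INR j + 1)) u)) by (intros l _; unfold tsub, tadd, tscale; ring).
    rewrite frob_scale, Hu, Rabs_pos_eq by (left; apply inv_succ_pos). specialize (HN j Hj). lra.
  - apply tconv_const.
Qed.

(** * Symmetric best rank-one approximations are [||A||_2 · s x^{⊗d}] for maximizers.

    For a rank-one [X = t · z^1⊗...⊗z^d] with unit [z^j]:
    [|A - X|_F^2 = |A|_F^2 - 2t A(z) + t^2 >= |A|_F^2 - ||A||_2^2], with equality iff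
    [t = A(z) = ||A||_2]. *)

Lemma rank1_error_lower d n A zs : (1 <= n)%nat ->
  frob d n A * frob d n A - spec_norm d n A * spec_norm d n A <=
  frob d n (tsub A (outer zs)) * frob d n (tsub A (outer zs)).
Proof.
  intros Hn. rewrite frob_sub_sq. pose proof (mform_le_spec d n A zs Hn). unfold mform in H.
  pose proof (Rle_0_sqr (spec_norm d n A - frob d n (outer zs))). unfold Rsqr in H0.
  pose proof (frob_nonneg d n (outer zs)). nra.
Qed.

(* A best approximation [Y] of [A ≠ 0] satisfies [||A||_2^2 <= |A|^2 - |A - Y|^2]: compare [Y]
   with [A(z) · z^1⊗...⊗z^d] for every unit tuple [z] with [A(z) > 0]. *)
Lemma best_approx_gap d n A Y : (1 <= n)%nat -> (1 <= d)%nat -> 0 < spec_norm d n A ->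
  best_rank_one_approx d n A Y ->
  spec_norm d n A * spec_norm d n A <= frob d n A * frob d n A - frob d n (tsub A Y) * frob d n (tsub A Y).
Proof.
  intros Hn Hd Hsig [_ Hbest].
  set (K := frob d n A * frob d n A - frob d n (tsub A Y) * frob d n (tsub A Y)).
  assert (HT : forall zs, unit_tuple d n zs -> 0 < mform d n A zs -> mform d n A zs * mform d n A zs <= K).
  { intros zs Hzs HT. set (t := mform d n A zs) in *. set (X := tscale t (outer zs)).
    assert (HX : rank_one d n X).
    { split; [exists (set_slot zs 0 (vlin t (zs O) 0 (zs O))); apply scale_outer_rank1; auto|].
      intro H. apply (frob_ext d n _ _) in H. unfold X in H.
      rewrite frob_scale, frob_outer_unit, frob_zero, Rabs_pos_eq in H; auto; lra. }
    assert (EX : frob d n (tsub A X) * frob d n (tsub A X) = frob d n A * frob d n A - t * t).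
    { rewrite frob_sub_sq. unfold X. rewrite ip_scale_r, frob_scale, frob_outer_unit, Rabs_pos_eq by (auto; lra).
      unfold t, mform. ring. }
    pose proof (Hbest X HX). pose proof (frob_nonneg d n (tsub A Y)).
    assert (frob d n (tsub A Y) * frob d n (tsub A Y) <= frob d n (tsub A X) * frob d n (tsub A X))
      by (apply Rmult_le_compat; auto). unfold K. lra. }
  assert (Hle : spec_norm d n A <= sqrt K).
  { apply spec_le; auto. intros zs Hzs. pose proof (sqrt_pos K).
    destruct (Rle_lt_dec (mform d n A zs) 0) as [L|L]; [lra|].
    rewrite <- (sqrt_square (mform d n A zs)) by lra. apply sqrt_le_1_alt. apply HT; auto. }
  assert (HK : 0 < K) by (destruct (Rle_lt_dec K 0) as [L|L]; [rewrite sqrt_neg_0 in Hle; lra | auto]).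
  rewrite <- (sqrt_sqrt K) by lra. apply Rmult_le_compat; lra.
Qed.

Lemma best_of_maximizer d n A x s : (1 <= n)%nat -> (1 <= d)%nat -> unit_vec n x -> s * s = 1 ->
  0 < spec_norm d n A -> frob_ip d n A (sym_rank1 x s) = spec_norm d n A ->
  best_rank_one_approx d n A (tscale (spec_norm d n A) (sym_rank1 x s)) /\
  symmetric_rank_one_form d n (tscale (spec_norm d n A) (sym_rank1 x s)).
Proof.
  intros Hn Hd Hx Hs Hsig Hmax. set (sig := spec_norm d n A) in *. set (u := sym_rank1 x s) in *.
  assert (Hu : frob d n u = 1) by (apply frob_sym_rank1; auto).
  split; [split; [split|] |].
  - exists (set_slot (fun _ => x) 0 (vlin (sig * s) x 0 x)). intros l Hl.
    rewrite <- (scale_outer_rank1 d n (fun _ => x) (sig * s) Hd l Hl). unfold u, sym_rank1, tscale. ring.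
  - intro H. apply (frob_ext d n _ _) in H. rewrite frob_scale, Hu, frob_zero, Rabs_pos_eq in H; lra.
  - intros X [[zs HX] _]. apply Rsqr_incr_0_var; [| apply frob_nonneg]. unfold Rsqr.
    rewrite (frob_ext d n (tsub A X) (tsub A (outer zs))) by (intros l Hl; unfold tsub; rewrite HX; auto).
    pose proof (rank1_error_lower d n A zs Hn). fold sig in H.
    rewrite frob_sub_sq, ip_scale_r, frob_scale, Rabs_pos_eq, Hu, Hmax by lra. lra.
  - exists (sig * s), x. intros l _. unfold u, sym_rank1, tscale. ring.
Qed.

Lemma maximizer_of_best d n A Y : (1 <= n)%nat -> (1 <= d)%nat -> 0 < spec_norm d n A ->
  best_rank_one_approx d n A Y -> symmetric_rank_one_form d n Y ->
  exists x s, unit_vec n x /\ s * s = 1 /\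
    teq d n Y (tscale (spec_norm d n A) (sym_rank1 x s)) /\ frob_ip d n A (sym_rank1 x s) = spec_norm d n A.
Proof.
  intros Hn Hd Hsig Hbest [lam [y Hy]]. pose proof (best_approx_gap d n A Y Hn Hd Hsig Hbest) as Hgap.
  destruct Hbest as [[_ Hnz] _]. set (sig := spec_norm d n A) in *. set (nu := vnorm n y).
  assert (Hnu : nu <> 0).
  { intro E. apply Hnz. apply teq_zero_of_frob.
    rewrite (frob_ext d n Y _ Hy), frob_scale, frob_outer, (prodR_zero d _ 0%nat); [ring | lia | auto]. }
  set (x0 := fun i => y i / nu). assert (Hx0 : unit_vec n x0) by (apply unit_vec_normalize; auto).
  set (c := lam * prodR d (fun _ => nu)).
  assert (HY : teq d n Y (tscale c (sym_rank1 x0 1))).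
  { intros l Hl. rewrite Hy by auto. apply In_idx in Hl as [Hlen _]. unfold tscale, sym_rank1, c.
    replace (fun _ : nat => y) with (fun (_ : nat) i => nu * x0 i) by (extensionality m; extensionality i; unfold x0; field; auto).
    rewrite outer_const_scale, Hlen. unfold tscale. ring. }
  set (w := frob_ip d n A (sym_rank1 x0 1)).
  assert (Hw : Rabs w <= sig).
  { unfold w. rewrite ip_sym_rank1, Rmult_1_l. apply spec_abs; auto. intros j _; auto. }
  assert (EY : frob d n (tsub A Y) * frob d n (tsub A Y) = frob d n A * frob d n A - 2 * c * w + c * c).
  { rewrite frob_sub_sq, (ip_ext d n A A Y _ (fun l _ => eq_refl) HY), (frob_ext d n Y _ HY).
    rewrite ip_scale_r, frob_scale, frob_sym_rank1 by (auto; ring). fold w.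
    rewrite Rmult_1_r, <- Rabs_mult, Rabs_pos_eq by nra. ring. }
  assert (Hw2 : w * w <= sig * sig).
  { assert (w * w = Rabs w * Rabs w) by (rewrite <- Rabs_mult, Rabs_pos_eq; nra). pose proof (Rabs_pos w). nra. }
  assert (Hcw : c = w) by nra.
  assert (Hw3 : w * w = sig * sig) by (rewrite Hcw in EY; nra).
  exists x0, (c / sig). repeat split; auto.
  - transitivity (c * c / (sig * sig)); [field; lra|]. rewrite Hcw, Hw3. field. lra.
  - intros l Hl. rewrite HY by auto. unfold sym_rank1, tscale. field. lra.
  - rewrite ip_sym_rank1. replace (mform d n A (fun _ => x0)) with w by (unfold w; rewrite ip_sym_rank1; ring).
    rewrite Hcw. transitivity (w * w / sig); [field; lra|]. rewrite Hw3. field. lra.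
Qed.

(** * Criticality in terms of best rank-one approximations. *)

Lemma dim_pos_of_nonzero d n A : (1 <= d)%nat -> ~ teq d n A tzero -> (1 <= n)%nat.
Proof.
  intros Hd Hnz. destruct n; [|lia]. exfalso. apply Hnz. intros l Hl.
  destruct d; [lia | simpl in Hl; destruct Hl].
Qed.

Lemma choice_below {T} (t0 : T) r (P : nat -> T -> Prop) :
  (forall k, (k < r)%nat -> exists x, P k x) -> exists f : nat -> T, forall k, (k < r)%nat -> P k (f k).
Proof.
  intros H. destruct (choice (fun k x => (k < r)%nat -> P k x)) as [f Hf]; [|eauto].
  intros k. destruct (Nat.lt_ge_cases k r) as [Hk|Hk].
  - destruct (H k Hk) as [x Hx]. exists x; auto.
  - exists t0. intros; lia.
Qed.

Lemma maximizer_normalize d n A x s : (1 <= n)%nat -> 0 < frob d n A ->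
  frob_ip d n (tscale (/ frob d n A) A) (sym_rank1 x s) = spec_norm d n (tscale (/ frob d n A) A) <->
  frob_ip d n A (sym_rank1 x s) = spec_norm d n A.
Proof.
  intros Hn HF. rewrite ip_scale_l, spec_scale by (auto; apply Rinv_0_lt_compat; auto).
  split; intros H; [apply (Rmult_eq_reg_l (/ frob d n A)); auto; apply Rinv_neq_0_compat; lra | now rewrite H].
Qed.

(* The multiplier of a critical point: pairing [λ A = Σ c_k u_k] (with [<A, u_k> = ||A||_2]
   and [Σ c_k = 1]) with [A] forces [λ = ||A||_2 / |A|_F^2]. *)
Lemma critical_multiplier d n A lam r c (us : nat -> tensor) : 0 < frob d n A ->
  (forall k, (k < r)%nat -> frob_ip d n A (us k) = spec_norm d n A) -> rsum r c = 1 ->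
  teq d n (tscale lam A) (fun l => rsum r (fun k => c k * us k l)) ->
  lam = spec_norm d n A / (frob d n A * frob d n A).
Proof.
  intros HF Hmax Hsum Heq. pose proof (ip_ext d n A A _ _ (fun l _ => eq_refl) Heq) as H.
  rewrite ip_rsum, ip_scale_r, <- frob_sq in H.
  rewrite (rsum_ext r _ (fun k => spec_norm d n A * c k)), rsum_scal, Hsum in H
    by (intros k Hk; rewrite Hmax by auto; ring).
  apply (Rmult_eq_reg_r (frob d n A * frob d n A)); [rewrite H; field | nra]; lra.
Qed.

Lemma critical_maximizer_decomposition d n A : (1 <= n)%nat -> (1 <= d)%nat -> ~ teq d n A tzero ->
  critical d n (is_sym d n) A ->
  exists r c xs ss, (forall k, (k < r)%nat -> 0 <= c k /\ unit_vec n (xs k) /\ ss k * ss k = 1 /\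
      frob_ip d n A (sym_rank1 (xs k) (ss k)) = spec_norm d n A) /\ rsum r c = 1 /\
    teq d n (tscale (spec_norm d n A / (frob d n A * frob d n A)) A)
      (fun l => rsum r (fun k => c k * sym_rank1 (xs k) (ss k) l)).
Proof.
  intros Hn Hd Hnz [_ [lam [r [c [Ls [Hk [Hsum Heq]]]]]]]. pose proof (frob_pos d n A Hnz) as HF.
  destruct (choice_below ((fun _ => 0), 0) r (fun k xs => unit_vec n (fst xs) /\ snd xs * snd xs = 1 /\
     teq d n (Ls k) (sym_rank1 (fst xs) (snd xs)) /\ frob_ip d n A (sym_rank1 (fst xs) (snd xs)) = spec_norm d n A))
    as [f Hf].
  { intros k Hk0. destruct (Hk k Hk0) as [_ HL].
    destruct (limit_grad_sym_maximizer d n _ _ Hn Hd HL) as [x [s [Hx [Hs [HLx Hmax]]]]].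
    exists (x, s). repeat split; auto. apply (maximizer_normalize d n A x s Hn HF), Hmax. }
  exists r, c, (fun k => fst (f k)), (fun k => snd (f k)).
  assert (Heq' : teq d n (tscale lam A) (fun l => rsum r (fun k => c k * sym_rank1 (fst (f k)) (snd (f k)) l))).
  { intros l Hl. rewrite Heq by auto. apply rsum_ext. intros k Hk0.
    destruct (Hf k Hk0) as [_ [_ [HT _]]]. rewrite HT; auto. }
  rewrite <- (critical_multiplier d n A lam r c (fun k => sym_rank1 (fst (f k)) (snd (f k)))); auto.
  - split; auto. intros k Hk0. destruct (Hk k Hk0) as [Hc _]. destruct (Hf k Hk0) as [Hx [Hs [_ Hmax]]].
    auto.
  - intros k Hk0. apply Hf; auto.
Qed.

Lemma critical_best_decomposition d n A : (1 <= d)%nat -> ~ teq d n A tzero ->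
  critical d n (is_sym d n) A ->
  exists r c Ys, (forall k, (k < r)%nat -> 0 <= c k /\
      best_rank_one_approx d n A (Ys k) /\ symmetric_rank_one_form d n (Ys k)) /\ rsum r c = 1 /\
    teq d n (tscale ((spec_norm d n A / frob d n A) ^ 2) A) (fun l => rsum r (fun k => c k * Ys k l)).
Proof.
  intros Hd Hnz Hc. pose proof (dim_pos_of_nonzero d n A Hd Hnz) as Hn.
  pose proof (frob_pos d n A Hnz) as HF. pose proof (spec_pos d n A Hn Hd Hnz) as Hsig.
  destruct (critical_maximizer_decomposition d n A Hn Hd Hnz Hc) as [r [c [xs [ss [Hk [Hsum Heq]]]]]].
  exists r, c, (fun k => tscale (spec_norm d n A) (sym_rank1 (xs k) (ss k))).
  split; [|split; auto].
  - intros k Hk0. destruct (Hk k Hk0) as [Hc0 [Hx [Hs Hmax]]]. split; auto. apply best_of_maximizer; auto.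
  - intros l Hl.
    rewrite rsum_ext with (g := fun k => spec_norm d n A * (c k * sym_rank1 (xs k) (ss k) l))
      by (intros; unfold tscale; ring).
    rewrite rsum_scal, <- Heq by auto. unfold tscale. field. lra.
Qed.

Lemma critical_of_best_decomposition d n (V : tensor -> Prop) A r c Ys : (1 <= d)%nat ->
  is_sym d n A -> ~ teq d n A tzero -> (forall B, is_sym d n B -> V B) ->
  (forall k, (k < r)%nat -> 0 <= c k /\
     best_rank_one_approx d n A (Ys k) /\ symmetric_rank_one_form d n (Ys k)) -> rsum r c = 1 ->
  teq d n (tscale ((spec_norm d n A / frob d n A) ^ 2) A) (fun l => rsum r (fun k => c k * Ys k l)) ->
  critical d n V A.
Proof.
  intros Hd HA Hnz HV Hk Hsum Heq. pose proof (dim_pos_of_nonzero d n A Hd Hnz) as Hn.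
  pose proof (frob_pos d n A Hnz) as HF. pose proof (spec_pos d n A Hn Hd Hnz) as Hsig.
  set (sig := spec_norm d n A) in *. set (F := frob d n A) in *.
  destruct (choice_below ((fun _ => 0), 0) r (fun k xs => unit_vec n (fst xs) /\ snd xs * snd xs = 1 /\
     teq d n (Ys k) (tscale sig (sym_rank1 (fst xs) (snd xs))) /\ frob_ip d n A (sym_rank1 (fst xs) (snd xs)) = sig))
    as [f Hf].
  { intros k Hk0. destruct (Hk k Hk0) as [_ [HB HS]].
    destruct (maximizer_of_best d n A (Ys k) Hn Hd Hsig HB HS) as [x [s H]]. exists (x, s). exact H. }
  split; auto. exists (sig / (F * F)), r, c, (fun k => sym_rank1 (fst (f k)) (snd (f k))).
  split; [|split; auto].
  - intros k Hk0. destruct (Hk k Hk0) as [Hc _]. destruct (Hf k Hk0) as [Hx [Hs [_ Hmax]]].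
    split; auto. apply maximizer_limit_grad; auto.
    + intros t. apply HV, is_sym_add; [apply is_sym_scale; auto | apply is_sym_scale, sym_rank1_sym].
    + apply HV, sym_rank1_sym.
    + apply (maximizer_normalize d n A _ _ Hn HF), Hmax.
  - intros l Hl. pose proof (Heq l Hl) as E. unfold tscale in E |- *.
    rewrite (rsum_ext r _ (fun k => sig * (c k * sym_rank1 (fst (f k)) (snd (f k)) l))) in E.
    + rewrite rsum_scal in E. apply (Rmult_eq_reg_l sig); [rewrite <- E; field | ]; lra.
    + intros k Hk0. destruct (Hf k Hk0) as [_ [_ [HT _]]]. rewrite HT by auto. unfold tscale. ring.
Qed.

Theorem theorem1p9 (d n : nat) (A : tensor) :
  (1 <= d)%nat ->
  is_sym d n A ->
  ~ teq d n A tzero ->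
  (critical d n (is_sym d n) A <->
   exists (r : nat) (Ys : nat -> tensor) (alpha : nat -> R),
     (forall k, (k < r)%nat ->
        best_rank_one_approx d n A (Ys k) /\
        symmetric_rank_one_form d n (Ys k) /\
        0 < alpha k) /\
     rsum r alpha = 1 /\
     teq d n (tscale ((spec_norm d n A / frob d n A) ^ 2) A)
             (fun l => rsum r (fun k => alpha k * Ys k l)))
  /\
  (critical d n (is_sym d n) A -> critical d n (full_space d n) A).
Proof.
  intros Hd HA Hnz. split; [split|].
  -
    intros Hc. destruct (critical_best_decomposition d n A Hd Hnz Hc) as [r [c [Ys [Hk [Hsum Heq]]]]].
    destruct (rsum_drop_zero_coeffs r c Ys
                (fun Y => best_rank_one_approx d n A Y /\ symmetric_rank_one_form d n Y))
      as [r' [c' [Ys' [Hk' [Hsum' Heq']]]]]; [intros k Hk0; destruct (Hk k Hk0) as [? [? ?]]; auto|].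
    exists r', Ys', c'. split; [|split].
    + intros k Hk0. destruct (Hk' k Hk0) as [Hpos [HB HS]]. auto.
    + rewrite Hsum'. exact Hsum.
    + intros l Hl. rewrite Heq'. apply Heq; auto.
  - intros [r [Ys [alpha [Hk [Hsum Heq]]]]].
    apply (critical_of_best_decomposition d n (is_sym d n) A r alpha Ys); auto.
    intros k Hk0. destruct (Hk k Hk0) as [? [? ?]]. split; [lra | auto].
  - intros Hc. destruct (critical_best_decomposition d n A Hd Hnz Hc) as [r [c [Ys [Hk [Hsum Heq]]]]].
    apply (critical_of_best_decomposition d n (full_space d n) A r c Ys); auto.
    intros; exact I.
Qed.
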